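(* Let $0<T^\star<+\infty$ and let $(g,K,F,E,u,\Theta,\rho,e)$ be a $C^1$ solution of the evolution system (S) on $[0,T^\star)$, with $g$ positive definite, $\rho>0$, $e\ge0$, $\Theta^{00}\ge0$, satisfying the constraints (C1)–(C4) for all $t\in[0,T^\star)$. If the mean curvature $H=g^{ij}K_{ij}$ is bounded on $[0,T^\star)$, then $g$, $K$, $F$, $E$, $u$, $\Theta$, $\rho$, $e$, $(\det g)^{-1}$, $u^0=\sqrt{1+g_{ij}u^iu^j}$ and $1/\rho$ are all bounded on $[0,T^\star)$.
   Context: Setting. $G$ is a three-dimensional connected Lie group of Bianchi type I–VIII, $(e_i)_{i=1,2,3}$ a left-invariant frame with structure constants $C^k_{ij}$ defined by $[e_i,e_j]=C^k_{ij}e_k$ (so $C^k_{ij}=-C^k_{ji}$ and the Jacobi identity holds). $\Lambda\in\mathbb{R}$ is a constant. Latin indices run over $1,2,3$; repeated indices are summed. Unknowns (functions of $t$): a symmetric positive definite matrix $g=(g_{ij})$ with inverse $(g^{ij})$; a symmetric matrix $K=(K_{ij})$; an antisymmetric matrix $F=(F_{ij})$; vectors $E=(E^i)$, $u=(u^i)$; $\Theta=(\Theta^{00},\Theta^{0i})$; a function $\rho>0$; a function $e\ge0$. Derived quantities: $u^0=\sqrt{1+g_{ij}u^iu^j}$, $u_i=g_{ij}u^j$; $H=g^{ij}K_{ij}$; $K^i_j=g^{ik}K_{kj}$, $K^{ij}=g^{ik}g^{jl}K_{kl}$; $F^{ij}=g^{ik}g^{jl}F_{kl}$; $\gamma^l_{ij}=\tfrac12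 g^{lk}(-C^m_{jk}g_{im}+C^m_{ki}g_{jm}+C^m_{ij}g_{km})$; $R_{ij}=\gamma^l_{lm}\gamma^m_{ji}-\gamma^m_{jl}\gamma^l_{mi}-C^l_{mj}\gamma^m_{li}$, $R=g^{ij}R_{ij}$; $\tau_{00}=\tfrac12 g_{ij}E^iE^j+\tfrac14 g^{ik}g^{jl}F_{kl}F_{ij}$, $\tau_{0j}=-E^kF_{jk}$, $\tau_{ij}=(\tfrac12 g_{ij}g_{kl}-g_{ik}g_{jl})E^kE^l-\tfrac14 g_{ij}g^{km}g^{nl}F_{kl}F_{mn}+g^{kl}F_{ik}F_{jl}$; $\Theta_{00}=\Theta^{00}$, $\Theta_{0j}=-g_{jk}\Theta^{0k}$; $T_{00}=\tfrac43\rho(u^0)^2+\Theta_{00}$, $T_{0j}=-\tfrac43\rho u^0u_j+\Theta_{0j}$, $T_{ij}=\tfrac43\rho u_iu_j+\tfrac13\rho g_{ij}$; $\nabla$ is the Levi-Civita connection of the left-invariant metric $g$, so for left-invariant tensors $\nabla_kK_{ij}=-\gamma^l_{ki}K_{lj}-\gamma^l_{kj}K_{il}$ and $\nabla^iK_{ij}=g^{ik}\nabla_kK_{ij}$. Evolution system (S) (dot $=d/dt$): $\dot g_{ij}=-2K_{ij}$; $\dot K_{ij}=R_{ij}+HK_{ij}-2K^l_jK_{il}-8\pi(\tau_{ij}+T_{ij})+4\pi(-T_{00}+g^{lm}T_{lm})g_{ij}-\Lambda g_{ij}$; $\dot F_{ij}=C^k_{ij}g_{kl}E^l$; $\dot E^i=HE^i-C^j_{jk}E^k\frac{u^i}{u^0}-C^j_{jk}g^{kl}g^{im}F_{lm}-\tfrac12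 C^i_{jk}g^{jl}g^{km}F_{lm}$; $\dot u^i=2K^i_ju^j-\gamma^i_{jk}\frac{u^ju^k}{u^0}+\frac{3}{4\rho u^0}C^j_{jk}E^kE^i-\frac{3}{4\rho(u^0)^2}C^j_{jk}E^kg^{il}F_{ml}u^m$; $\dot\Theta^{00}=H\Theta^{00}-C^i_{ij}\Theta^{0j}+\tfrac13\rho H+\rho u^0$; $\dot\Theta^{0i}=H\Theta^{0i}+2K^i_j\Theta^{0j}-\tfrac{\rho}{3}(C^k_{kj}g^{ij}+\gamma^i_{jk}g^{jk})+\rho u^i$; $\dot\rho=-\big(\frac{3}{4u^0}+K_{ij}\frac{u^iu^j}{(u^0)^2}-H+C^i_{ij}\frac{u^j}{u^0}\big)\rho-\tfrac34 g_{il}C^j_{jk}E^kE^l\frac{u^i}{(u^0)^3}$; $\dot e=-\big(K_{ij}\frac{u^iu^j}{(u^0)^2}+C^i_{ik}\frac{u^k}{u^0}-H\big)e+\tfrac34 g_{ij}\frac{u^iE^j}{(u^0)^2}\frac{e^2}{\rho}$. Constraints: (C1) $R-K_{ij}K^{ij}+H^2=16\pi(\tau_{00}+T_{00})+2\Lambda$; (C2) $\nabla^iK_{ij}=-8\pi(\tau_{0j}+T_{0j})$; (C3) $C^l_{ij}F_{kl}+C^l_{jk}F_{il}+C^l_{ki}F_{jl}=0$; (C4) $C^i_{ik}E^k+eu^0=0$. Model assumption: $\Theta^{00}\ge0$ (in the model $\Theta_{00}=(z_0)^2$ for a future-pointing vector $z$). For Bianchi types I–VIII the scalar curvature satisfies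 $R\le0$. *)

(* real numbers (Reals). Indices i = 0,1,2 (nat) stand for 1,2,3. *)
From Stdlib Require Import Reals Lra.
Open Scope R_scope.

Definition mat := nat -> nat -> R.
Definition vec := nat -> R.
(* structure constants: C k i j = C^k_{ij},  [e_i,e_j] = C^k_{ij} e_k *)
Definition sconst := nat -> nat -> nat -> R.

Definition sum3 (f : nat -> R) : R := f 0%nat + f 1%nat + f 2%nat.

Definition eps3 (i j k : nat) : R :=
  match i, j, k with
  | O, S O, S (S O) | S O, S (S O), O | S (S O), O, S O => 1
  | O, S (S O), S O | S (S O), S O, O | S O, O, S (S O) => -1
  | _, _, _ => 0
  end.

Definition kdelta (i j : nat) : R := if Nat.eqb i j then 1 else 0.

Definition det3 (g : mat) : R :=
  sum3 (fun i => sum3 (fun j => sum3 (fun k =>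
    eps3 i j k * g 0%nat i * g 1%nat j * g 2%nat k))).

(* g^{ij} = adj(g)_{ij} / det g, adj via cofactors *)
Definition ginv (g : mat) : mat := fun i j =>
  / det3 g * (1/2) * sum3 (fun m => sum3 (fun n => sum3 (fun p => sum3 (fun q =>
    eps3 j m n * eps3 i p q * g m p * g n q)))).

Definition sym3 (A : mat) : Prop := forall i j, (i < 3)%nat -> (j < 3)%nat -> A i j = A j i.
Definition antisym3 (A : mat) : Prop := forall i j, (i < 3)%nat -> (j < 3)%nat -> A i j = - A j i.
Definition posdef3 (g : mat) : Prop :=
  forall v : vec, (v 0%nat <> 0 \/ v 1%nat <> 0 \/ v 2%nat <> 0) ->
    sum3 (fun i => sum3 (fun j => g i j * v i * v j)) > 0.

Definition C_antisym (C : sconst) : Prop :=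
  forall k i j, (k < 3)%nat -> (i < 3)%nat -> (j < 3)%nat -> C k i j = - C k j i.
Definition C_jacobi (C : sconst) : Prop :=
  forall i j k l, (i < 3)%nat -> (j < 3)%nat -> (k < 3)%nat -> (l < 3)%nat ->
    sum3 (fun m => C m i j * C l m k + C m j k * C l m i + C m k i * C l m j) = 0.
(* Bianchi type IX: the Lie algebra is isomorphic to so(3) = su(2), i.e. in some
   frame e'_a = A^i_a e_i (with inverse B) the structure constants are eps_{abc}. *)
Definition bianchi_IX (C : sconst) : Prop :=
  exists A B : mat,
    (forall i j, (i < 3)%nat -> (j < 3)%nat -> sum3 (fun k => A i k * B k j) = kdelta i j) /\
    (forall a b c, (a < 3)%nat -> (b < 3)%nat -> (c < 3)%nat ->
       sum3 (fun k => B c k * sum3 (fun i => sum3 (fun j => A i a * A j b * C k i j)))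
       = eps3 a b c).
(* every real 3-dim Lie algebra is of Bianchi type I..IX; types I-VIII = not IX *)
Definition bianchi_I_VIII (C : sconst) : Prop :=
  C_antisym C /\ C_jacobi C /\ ~ bianchi_IX C.

Definition u0 (g : mat) (u : vec) : R :=
  sqrt (1 + sum3 (fun i => sum3 (fun j => g i j * u i * u j))).
Definition lowr (g : mat) (u : vec) : vec := fun i => sum3 (fun j => g i j * u j).
Definition Hmc (g K : mat) : R := sum3 (fun i => sum3 (fun j => ginv g i j * K i j)).
Definition Kud (g K : mat) : mat := fun i j => sum3 (fun k => ginv g i k * K k j).
Definition Kuu (g K : mat) : mat := fun i j =>
  sum3 (fun k => sum3 (fun l => ginv g i k * ginv g j l * K k l)).
Definition gam (C : sconst) (g : mat) (l i j : nat) : R :=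
  (1/2) * sum3 (fun k => ginv g l k *
     (- sum3 (fun m => C m j k * g i m) + sum3 (fun m => C m k i * g j m)
      + sum3 (fun m => C m i j * g k m))).
Definition Ric (C : sconst) (g : mat) : mat := fun i j =>
  sum3 (fun l => sum3 (fun m => gam C g l l m * gam C g m j i))
  - sum3 (fun l => sum3 (fun m => gam C g m j l * gam C g l m i))
  - sum3 (fun l => sum3 (fun m => C l m j * gam C g m l i)).
Definition Rsc (C : sconst) (g : mat) : R :=
  sum3 (fun i => sum3 (fun j => ginv g i j * Ric C g i j)).

Definition tau00 (g : mat) (E : vec) (F : mat) : R :=
  (1/2) * sum3 (fun i => sum3 (fun j => g i j * E i * E j))
  + (1/4) * sum3 (fun i => sum3 (fun j => sum3 (fun k => sum3 (fun l =>
       ginv g i k * ginv g j l * F k l * F i j)))).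
Definition tau0 (E : vec) (F : mat) : vec := fun j => - sum3 (fun k => E k * F j k).
Definition tauij (g : mat) (E : vec) (F : mat) : mat := fun i j =>
  sum3 (fun k => sum3 (fun l => ((1/2) * g i j * g k l - g i k * g j l) * E k * E l))
  - (1/4) * g i j * sum3 (fun k => sum3 (fun m => sum3 (fun n => sum3 (fun l =>
       ginv g k m * ginv g n l * F k l * F m n))))
  + sum3 (fun k => sum3 (fun l => ginv g k l * F i k * F j l)).

Definition T00 (g : mat) (u : vec) (rho Th00 : R) : R :=
  4/3 * rho * (u0 g u)^2 + Th00.
Definition T0 (g : mat) (u : vec) (rho : R) (Th0 : vec) : vec := fun j =>
  - (4/3) * rho * u0 g u * lowr g u j - sum3 (fun k => g j k * Th0 k).
Definition Tij (g : mat) (u : vec) (rho : R) : mat := fun i j =>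
  4/3 * rho * lowr g u i * lowr g u j + (1/3) * rho * g i j.

(* nabla^i K_{ij} for the left-invariant tensor K *)
Definition divK (C : sconst) (g K : mat) : vec := fun j =>
  sum3 (fun i => sum3 (fun k => ginv g i k *
     (- sum3 (fun l => gam C g l k i * K l j) - sum3 (fun l => gam C g l k j * K i l)))).

Definition trC (C : sconst) (k : nat) : R := sum3 (fun j => C j j k).
Definition CE (C : sconst) (E : vec) : R := sum3 (fun k => trC C k * E k).

Definition rhs_g (K : mat) : mat := fun i j => -2 * K i j.
Definition rhs_K (C : sconst) (Lam : R) (g K F : mat) (E u : vec) (rho Th00 : R) (Th0 : vec)
  : mat := fun i j =>
  Ric C g i j + Hmc g K * K i j - 2 * sum3 (fun l => Kud g K l j * K i l)
  - 8 * PI * (tauij g E F i j + Tij g u rho i j)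
  + 4 * PI * (- T00 g u rho Th00
              + sum3 (fun l => sum3 (fun m => ginv g l m * Tij g u rho l m))) * g i j
  - Lam * g i j.
Definition rhs_F (C : sconst) (g : mat) (E : vec) : mat := fun i j =>
  sum3 (fun k => C k i j * sum3 (fun l => g k l * E l)).
Definition rhs_E (C : sconst) (g K F : mat) (E u : vec) : vec := fun i =>
  Hmc g K * E i - CE C E * u i / u0 g u
  - sum3 (fun k => sum3 (fun l => sum3 (fun m => trC C k * ginv g k l * ginv g i m * F l m)))
  - (1/2) * sum3 (fun j => sum3 (fun k => sum3 (fun l => sum3 (fun m =>
        C i j k * ginv g j l * ginv g k m * F l m)))).
Definition rhs_u (C : sconst) (g K F : mat) (E u : vec) (rho : R) : vec := fun i =>
  2 * sum3 (fun j => Kud g K i j * u j)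
  - sum3 (fun j => sum3 (fun k => gam C g i j k * u j * u k)) / u0 g u
  + 3 / (4 * rho * u0 g u) * CE C E * E i
  - 3 / (4 * rho * (u0 g u)^2) * CE C E *
      sum3 (fun l => sum3 (fun m => ginv g i l * F m l * u m)).
Definition rhs_Th00 (C : sconst) (g K : mat) (u : vec) (rho Th00 : R) (Th0 : vec) : R :=
  Hmc g K * Th00 - sum3 (fun i => sum3 (fun j => C i i j * Th0 j))
  + (1/3) * rho * Hmc g K + rho * u0 g u.
Definition rhs_Th0 (C : sconst) (g K : mat) (u : vec) (rho : R) (Th0 : vec) : vec := fun i =>
  Hmc g K * Th0 i + 2 * sum3 (fun j => Kud g K i j * Th0 j)
  - rho / 3 * (sum3 (fun j => trC C j * ginv g i j)
               + sum3 (fun j => sum3 (fun k => gam C g i j k * ginv g j k)))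
  + rho * u i.
Definition rhs_rho (C : sconst) (g K : mat) (E u : vec) (rho : R) : R :=
  - (3 / (4 * u0 g u)
     + sum3 (fun i => sum3 (fun j => K i j * u i * u j)) / (u0 g u)^2
     - Hmc g K + sum3 (fun j => trC C j * u j) / u0 g u) * rho
  - 3/4 * sum3 (fun i => sum3 (fun l => g i l * CE C E * E l * u i)) / (u0 g u)^3.
Definition rhs_e (C : sconst) (g K : mat) (E u : vec) (rho e : R) : R :=
  - (sum3 (fun i => sum3 (fun j => K i j * u i * u j)) / (u0 g u)^2
     + sum3 (fun k => trC C k * u k) / u0 g u - Hmc g K) * e
  + 3/4 * sum3 (fun i => sum3 (fun j => g i j * u i * E j)) / (u0 g u)^2 * (e^2 / rho).

Definition constraint1 (C : sconst) (Lam : R) (g K F : mat) (E u : vec) (rho Th00 : R) : Prop :=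
  Rsc C g - sum3 (fun i => sum3 (fun j => K i j * Kuu g K i j)) + (Hmc g K)^2
  = 16 * PI * (tau00 g E F + T00 g u rho Th00) + 2 * Lam.
Definition constraint2 (C : sconst) (g K F : mat) (E u : vec) (rho : R) (Th0 : vec) : Prop :=
  forall j, (j < 3)%nat -> divK C g K j = - 8 * PI * (tau0 E F j + T0 g u rho Th0 j).
Definition constraint3 (C : sconst) (F : mat) : Prop :=
  forall i j k, (i < 3)%nat -> (j < 3)%nat -> (k < 3)%nat ->
    sum3 (fun l => C l i j * F k l + C l j k * F i l + C l k i * F j l) = 0.
Definition constraint4 (C : sconst) (g : mat) (E u : vec) (e : R) : Prop :=
  CE C E + e * u0 g u = 0.

Definition deriv_on (f f' : R -> R) (T : R) : Prop :=
  forall t, 0 <= t < T -> forall epsilon, epsilon > 0 -> exists delta, delta > 0 /\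
    forall h, h <> 0 -> Rabs h < delta -> 0 <= t + h < T ->
      Rabs ((f (t + h) - f t) / h - f' t) < epsilon.
Definition cont_on (f : R -> R) (T : R) : Prop :=
  forall t, 0 <= t < T -> forall epsilon, epsilon > 0 -> exists delta, delta > 0 /\
    forall s, Rabs (s - t) < delta -> 0 <= s < T -> Rabs (f s - f t) < epsilon.
Definition C1_on (f f' : R -> R) (T : R) : Prop := deriv_on f f' T /\ cont_on f' T.

Definition bounded_on (f : R -> R) (T : R) : Prop :=
  exists M, forall t, 0 <= t < T -> Rabs (f t) <= M.
Definition vbounded_on (f : R -> vec) (T : R) : Prop :=
  forall i, (i < 3)%nat -> bounded_on (fun t => f t i) T.
Definition mbounded_on (f : R -> mat) (T : R) : Prop :=
  forall i j, (i < 3)%nat -> (j < 3)%nat -> bounded_on (fun t => f t i j) T.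

Definition solves_S (C : sconst) (Lam T : R)
  (g K F : R -> mat) (E u Th0 : R -> vec) (Th00 rho e : R -> R) : Prop :=
  (forall i j, (i < 3)%nat -> (j < 3)%nat ->
     C1_on (fun t => g t i j) (fun t => rhs_g (K t) i j) T /\
     C1_on (fun t => K t i j)
       (fun t => rhs_K C Lam (g t) (K t) (F t) (E t) (u t) (rho t) (Th00 t) (Th0 t) i j) T /\
     C1_on (fun t => F t i j) (fun t => rhs_F C (g t) (E t) i j) T) /\
  (forall i, (i < 3)%nat ->
     C1_on (fun t => E t i) (fun t => rhs_E C (g t) (K t) (F t) (E t) (u t) i) T /\
     C1_on (fun t => u t i) (fun t => rhs_u C (g t) (K t) (F t) (E t) (u t) (rho t) i) T /\
     C1_on (fun t => Th0 t i) (fun t => rhs_Th0 C (g t) (K t) (u t) (rho t) (Th0 t) i) T) /\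
  C1_on Th00 (fun t => rhs_Th00 C (g t) (K t) (u t) (rho t) (Th00 t) (Th0 t)) T /\
  C1_on rho (fun t => rhs_rho C (g t) (K t) (E t) (u t) (rho t)) T /\
  C1_on e (fun t => rhs_e C (g t) (K t) (E t) (u t) (rho t) (e t)) T.

(* For Bianchi types I-VIII the scalar curvature of a left-invariant metric is nonpositive:
   with Milnor's decomposition [C^k_ij = eps_ijl n^lk + delta^k_j a_i - delta^k_i a_j] one has
   [R det g = ((tr ng)^2 - 2 tr (ng)^2) / 2 - 6 det g |a|^2], and a positive first term forces
   [n] to be definite, which together with the Jacobi identity [n a = 0] is type IX.
   The Hamiltonian constraint (C1) then bounds [K_ij K^ij], [tau_00] and [T_00] by
   [H^2 + 2 |Lambda|], and Gronwall arguments do the rest: [(det g)' = -2 H det g] bounds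
   [det g] above and away from 0; [|K(v,v)| <= |K|_g g(v,v)] gives [(tr g)' <= c tr g], so [g],
   [g^-1] and, by polarisation, [K] are bounded; the energy bounds control [E], [F], [Theta^00]
   and [rho]. The Gauss constraint (C4) turns the equation for [e / rho] into
   [(e/rho)' = 3 (e/rho) / (4 u^0)] and makes [1 + |u|_g^2] satisfy a linear differential
   inequality; then [rho' / rho] is bounded, so [rho] is bounded below, and the momentum
   constraint (C2) bounds [Theta^0i]. *)

From Stdlib Require Import Reals Lra Lia Field.
Open Scope R_scope.

(** * Real analysis: differential inequalities and bounded functions *)

Lemma Rabs_le_bounds x a : Rabs x <= a -> - a <= x <= a.
Proof.
  intros H. pose proof (Rle_abs x). pose proof (Rle_abs (- x)). rewrite Rabs_Ropp in *. lra.
Qed.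

Lemma Rabs_le_of_sq_le_sq x c : 0 <= c -> x * x <= c * c -> Rabs x <= c.
Proof.
  intros Hc H. rewrite <- (Rabs_right c) by lra. apply Rsqr_le_abs_0. exact H.
Qed.

Lemma Rabs_le_succ_of_sq_le x c : 0 <= c -> x * x <= c -> Rabs x <= c + 1.
Proof. intros Hc H. apply Rabs_le_of_sq_le_sq; nra. Qed.

Lemma Rabs_le_of_sq_le x y Q : 0 <= Q -> 0 <= y -> x * x <= Q * (y * y) -> Rabs x <= (Q + 1) * y.
Proof.
  intros HQ Hy H. apply Rabs_le_of_sq_le_sq; [nra |].
  eapply Rle_trans; [exact H | nra].
Qed.

Lemma exp_le_compat x y : x <= y -> exp x <= exp y.
Proof.
  intros [Hlt | ->]; [apply Rlt_le, exp_increasing, Hlt | apply Rle_refl].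
Qed.

Lemma derivable_pt_lim_eq f x l l' :
  derivable_pt_lim f x l -> l = l' -> derivable_pt_lim f x l'.
Proof. now intros H <-. Qed.

Lemma derivable_pt_lim_add f g x df dg :
  derivable_pt_lim f x df -> derivable_pt_lim g x dg ->
  derivable_pt_lim (fun t => f t + g t) x (df + dg).
Proof. apply derivable_pt_lim_plus. Qed.

Lemma derivable_pt_lim_sub f g x df dg :
  derivable_pt_lim f x df -> derivable_pt_lim g x dg ->
  derivable_pt_lim (fun t => f t - g t) x (df - dg).
Proof. apply derivable_pt_lim_minus. Qed.

Lemma derivable_pt_lim_mul f g x df dg :
  derivable_pt_lim f x df -> derivable_pt_lim g x dg ->
  derivable_pt_lim (fun t => f t * g t) x (df * g x + f x * dg).
Proof. apply derivable_pt_lim_mult. Qed.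

Lemma derivable_pt_lim_quot f g x df dg :
  derivable_pt_lim f x df -> derivable_pt_lim g x dg -> g x <> 0 ->
  derivable_pt_lim (fun t => f t / g t) x ((df * g x - dg * f x) / g x ^ 2).
Proof.
  intros Hf Hg Hx. eapply derivable_pt_lim_eq.
  - exact (derivable_pt_lim_div f g x df dg Hf Hg Hx).
  - unfold Rsqr. field. exact Hx.
Qed.

Lemma derivable_pt_lim_exp_scal k x :
  derivable_pt_lim (fun t => exp (k * t)) x (k * exp (k * x)).
Proof.
  assert (Hlin : derivable_pt_lim (fun t => k * t) x k).
  { eapply derivable_pt_lim_eq.
    - apply (derivable_pt_lim_mul (fun _ => k) (fun t => t));
        [apply derivable_pt_lim_const | apply derivable_pt_lim_id].
    - ring. }
  eapply derivable_pt_lim_eq.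
  - exact (derivable_pt_lim_comp _ exp x _ _ Hlin (derivable_pt_lim_exp (k * x))).
  - ring.
Qed.

Lemma deriv_on_interior f f' T t :
  deriv_on f f' T -> 0 < t < T -> derivable_pt_lim f t (f' t).
Proof.
  intros Hd Ht eps Heps.
  destruct (Hd t ltac:(lra) eps Heps) as [d [Hd0 Hclose]].
  assert (Hpos : 0 < Rmin d (Rmin t (T - t))) by (repeat apply Rmin_pos; lra).
  exists (mkposreal _ Hpos). simpl. intros h Hh Hsmall.
  pose proof (Rmin_l d (Rmin t (T - t))). pose proof (Rmin_r d (Rmin t (T - t))).
  pose proof (Rmin_l t (T - t)). pose proof (Rmin_r t (T - t)).
  apply Rabs_def2 in Hsmall as Hsmall'.
  apply Hclose; auto; lra.
Qed.

(* The weight [exp (-a x)] makes [(y + b/a) exp (-a x)] nonincreasing. *)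
Lemma gronwall_forward (y y' : R -> R) (a b s t : R) : 0 < a -> s < t ->
  (forall c, s <= c <= t -> derivable_pt_lim y c (y' c)) ->
  (forall c, s < c < t -> y' c <= a * y c + b) ->
  y t + b / a <= (y s + b / a) * exp (a * (t - s)).
Proof.
  intros Ha Hst Hd Hle.
  set (phi := fun x => (y x + b / a) * exp (- a * x)).
  set (phi' := fun x => y' x * exp (- a * x) + (y x + b / a) * (- a * exp (- a * x))).
  destruct (MVT_cor2 phi phi' s t Hst) as [c [Hmvt Hc]].
  { intros c Hc. unfold phi, phi'.
    apply (derivable_pt_lim_mul (fun x => y x + b / a) (fun x => exp (- a * x))).
    - eapply derivable_pt_lim_eq.
      + apply derivable_pt_lim_add; [apply Hd; lra | apply derivable_pt_lim_const].
      + ring.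
    - apply derivable_pt_lim_exp_scal. }
  assert (Hdecr : phi' c <= 0).
  { unfold phi'.
    replace (y' c * exp (- a * c) + (y c + b / a) * (- a * exp (- a * c)))
      with ((y' c - (a * y c + b)) * exp (- a * c)) by (field; lra).
    pose proof (Hle c Hc). pose proof (exp_pos (- a * c)). nra. }
  assert (Hphi : phi t <= phi s) by nra.
  unfold phi in Hphi.
  assert (Hsplit : exp (a * (t - s)) = exp (a * t) * exp (- a * s))
    by (rewrite <- exp_plus; f_equal; ring).
  assert (Hinv : exp (- a * t) * exp (a * t) = 1)
    by (rewrite <- exp_plus, <- exp_0; f_equal; ring).
  pose proof (exp_pos (a * t)).
  rewrite Hsplit.
  replace (y t + b / a) with ((y t + b / a) * exp (- a * t) * exp (a * t))
    by (rewrite Rmult_assoc, Hinv; ring).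
  replace ((y s + b / a) * (exp (a * t) * exp (- a * s)))
    with ((y s + b / a) * exp (- a * s) * exp (a * t)) by ring.
  apply Rmult_le_compat_r; lra.
Qed.

(* Time reversal [x |-> y (- x)] turns a lower bound on [y'] into an upper one. *)
Lemma gronwall_backward (y y' : R -> R) (a b s t : R) : 0 < a -> s < t ->
  (forall c, s <= c <= t -> derivable_pt_lim y c (y' c)) ->
  (forall c, s < c < t -> - (a * y c + b) <= y' c) ->
  y s + b / a <= (y t + b / a) * exp (a * (t - s)).
Proof.
  intros Ha Hst Hd Hle.
  pose proof (gronwall_forward (fun x => y (- x)) (fun x => - y' (- x)) a b (- t) (- s) Ha
    ltac:(lra)) as Hrev.
  cbv beta in Hrev. rewrite !Ropp_involutive in Hrev. replace (- s - - t) with (t - s) in Hrev by ring.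
  apply Hrev.
  - intros c Hc. eapply derivable_pt_lim_eq.
    + apply (derivable_pt_lim_comp Ropp y).
      * apply derivable_pt_lim_opp, derivable_pt_lim_id.
      * apply Hd. lra.
    + ring.
  - intros c Hc. pose proof (Hle (- c) ltac:(lra)). lra.
Qed.

Lemma gronwall_two_sided (y y' : R -> R) (a b T : R) : 0 < a ->
  (forall t, 0 < t < T -> derivable_pt_lim y t (y' t)) ->
  (forall t, 0 < t < T -> Rabs (y' t) <= a * y t + b) ->
  forall s t, 0 < s < T -> 0 < t < T ->
  y t + b / a <= (y s + b / a) * exp (a * Rabs (t - s)).
Proof.
  intros Ha Hd Hle s t Hs Ht.
  destruct (Rtotal_order s t) as [Hst | [-> | Hts]].
  - rewrite Rabs_right by lra.
    apply (gronwall_forward y y'); auto.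
    + intros c Hc. apply Hd. lra.
    + intros c Hc. pose proof (Hle c ltac:(lra)). apply Rabs_le_bounds in H. lra.
  - rewrite Rminus_diag, Rabs_R0, Rmult_0_r, exp_0. lra.
  - rewrite Rabs_left, Ropp_minus_distr by lra.
    apply (gronwall_backward y y'); auto.
    + intros c Hc. apply Hd. lra.
    + intros c Hc. pose proof (Hle c ltac:(lra)). apply Rabs_le_bounds in H. lra.
Qed.

Lemma gronwall_bounded_above (y y' : R -> R) (a b T : R) : 0 < T -> 0 < a -> 0 <= b ->
  (forall t, 0 < t < T -> derivable_pt_lim y t (y' t)) ->
  (forall t, 0 < t < T -> Rabs (y' t) <= a * y t + b) ->
  exists B, forall t, 0 <= t < T -> y t <= B.
Proof.
  intros HT Ha Hb Hd Hle.
  assert (Hmid : 0 < T / 2 < T) by lra.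
  exists (Rmax (y 0) ((y (T / 2) + b / a) * exp (a * T))). intros t Ht.
  destruct (Req_dec t 0) as [-> | Ht0]; [apply Rmax_l |].
  eapply Rle_trans; [| apply Rmax_r].
  pose proof (gronwall_two_sided y y' a b T Ha Hd Hle (T / 2) t Hmid ltac:(lra)) as Hg.
  assert (Hnonneg : 0 <= y (T / 2) + b / a).
  { pose proof (Hle (T / 2) Hmid). pose proof (Rabs_pos (y' (T / 2))).
    replace (y (T / 2) + b / a) with ((a * y (T / 2) + b) / a) by (field; lra).
    apply Rmult_le_pos; [| apply Rlt_le, Rinv_0_lt_compat]; lra. }
  assert (exp (a * Rabs (t - T / 2)) <= exp (a * T)).
  { apply exp_le_compat, Rmult_le_compat_l; [lra |].
    apply Rabs_le. split; lra. }
  assert (0 <= b / a) by (apply Rmult_le_pos; [| apply Rlt_le, Rinv_0_lt_compat]; lra).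
  pose proof (Rmult_le_compat_l _ _ _ Hnonneg H). lra.
Qed.

Lemma gronwall_bounded_below (y y' : R -> R) (a T : R) : 0 < T -> 0 < a ->
  (forall t, 0 <= t < T -> 0 < y t) ->
  (forall t, 0 < t < T -> derivable_pt_lim y t (y' t)) ->
  (forall t, 0 < t < T -> Rabs (y' t) <= a * y t) ->
  exists c, 0 < c /\ forall t, 0 <= t < T -> c <= y t.
Proof.
  intros HT Ha Hpos Hd Hle.
  assert (Hmid : 0 < T / 2 < T) by lra.
  exists (Rmin (y 0) (y (T / 2) * exp (- (a * T)))). split.
  { apply Rmin_pos; [apply Hpos; lra |].
    apply Rmult_lt_0_compat; [apply Hpos; lra | apply exp_pos]. }
  intros t Ht.
  destruct (Req_dec t 0) as [-> | Ht0]; [apply Rmin_l |].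
  eapply Rle_trans; [apply Rmin_r |].
  assert (Hle0 : forall t, 0 < t < T -> Rabs (y' t) <= a * y t + 0)
    by (intros; rewrite Rplus_0_r; auto).
  pose proof (gronwall_two_sided y y' a 0 T Ha Hd Hle0 t (T / 2) ltac:(lra) Hmid) as Hg.
  rewrite Rdiv_0_l, !Rplus_0_r in Hg.
  assert (exp (a * Rabs (T / 2 - t)) <= exp (a * T)).
  { apply exp_le_compat, Rmult_le_compat_l; [lra |].
    apply Rabs_le. split; lra. }
  assert (Hyt : 0 < y t) by (apply Hpos; lra).
  assert (y (T / 2) <= y t * exp (a * T)).
  { eapply Rle_trans; [exact Hg |]. apply Rmult_le_compat_l; lra. }
  assert (Hinv : exp (a * T) * exp (- (a * T)) = 1)
    by (rewrite <- exp_plus, <- exp_0; f_equal; ring).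
  pose proof (exp_pos (- (a * T))).
  replace (y t) with (y t * exp (a * T) * exp (- (a * T))) by (rewrite Rmult_assoc, Hinv; ring).
  apply Rmult_le_compat_r; lra.
Qed.

Lemma bounded_on_ext f g T :
  (forall t, 0 <= t < T -> f t = g t) -> bounded_on g T -> bounded_on f T.
Proof. intros Heq [M HM]. exists M. intros t Ht. rewrite Heq by exact Ht. auto. Qed.

Lemma bounded_on_const c T : bounded_on (fun _ => c) T.
Proof. exists (Rabs c). intros; lra. Qed.

Lemma bounded_on_plus f g T :
  bounded_on f T -> bounded_on g T -> bounded_on (fun t => f t + g t) T.
Proof.
  intros [M1 H1] [M2 H2]. exists (M1 + M2). intros t Ht.
  pose proof (Rabs_triang (f t) (g t)). pose proof (H1 t Ht). pose proof (H2 t Ht). lra.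
Qed.

Lemma bounded_on_opp f T : bounded_on f T -> bounded_on (fun t => - f t) T.
Proof. intros [M HM]. exists M. intros t Ht. rewrite Rabs_Ropp. auto. Qed.

Lemma bounded_on_minus f g T :
  bounded_on f T -> bounded_on g T -> bounded_on (fun t => f t - g t) T.
Proof. intros Hf Hg. apply (bounded_on_plus f (fun t => - g t)); [| apply bounded_on_opp]; auto. Qed.

Lemma bounded_on_mult f g T :
  bounded_on f T -> bounded_on g T -> bounded_on (fun t => f t * g t) T.
Proof.
  intros [M1 H1] [M2 H2]. exists (M1 * M2). intros t Ht. rewrite Rabs_mult.
  apply Rmult_le_compat; auto using Rabs_pos.
Qed.

Lemma bounded_on_div f g T :
  bounded_on f T -> bounded_on (fun t => / g t) T -> bounded_on (fun t => f t / g t) T.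
Proof. apply bounded_on_mult. Qed.

Lemma bounded_on_pow f n T : bounded_on f T -> bounded_on (fun t => f t ^ n) T.
Proof.
  intros Hf. induction n as [| n IH]; simpl.
  - apply bounded_on_const.
  - apply (bounded_on_mult f (fun t => f t ^ n)); auto.
Qed.

Lemma bounded_on_inv f T c :
  0 < c -> (forall t, 0 <= t < T -> c <= f t) -> bounded_on (fun t => / f t) T.
Proof.
  intros Hc Hf. exists (/ c). intros t Ht. pose proof (Hf t Ht).
  rewrite Rabs_right.
  - apply Rinv_le_contravar; lra.
  - apply Rle_ge, Rlt_le, Rinv_0_lt_compat. lra.
Qed.

Lemma bounded_on_between f T B :
  (forall t, 0 <= t < T -> 0 <= f t <= B) -> bounded_on f T.
Proof. intros Hf. exists B. intros t Ht. pose proof (Hf t Ht). rewrite Rabs_right; lra. Qed.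

Ltac bounded_on_leaf := first
  [ apply bounded_on_const | assumption
  | match goal with H : forall i j, _ -> _ -> bounded_on _ _ |- _ => apply H; lia end
  | match goal with H : forall i, _ -> bounded_on _ _ |- _ => apply H; lia end
  | match goal with H : mbounded_on _ _ |- _ => apply H; lia end
  | match goal with H : vbounded_on _ _ |- _ => apply H; lia end ].

Ltac bounded_on_auto := repeat first
  [ bounded_on_leaf | apply bounded_on_plus | apply bounded_on_minus | apply bounded_on_mult
  | apply bounded_on_div | apply bounded_on_opp | apply bounded_on_pow ].

(** * Symmetric 3x3 matrices *)

Lemma sum3_ext f g : (forall k, (k < 3)%nat -> f k = g k) -> sum3 f = sum3 g.
Proof. intros H. unfold sum3. rewrite !H by lia. reflexivity. Qed.

Definition qform (A : mat) (v w : vec) : R := sum3 (fun i => sum3 (fun j => A i j * v i * w j)).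
Definition nonzero3 (v : vec) : Prop := v 0%nat <> 0 \/ v 1%nat <> 0 \/ v 2%nat <> 0.
Definition unit3 (i : nat) : vec := fun k => if Nat.eqb k i then 1 else 0.

Lemma sym3_entries (A : mat) : sym3 A ->
  A 1%nat 0%nat = A 0%nat 1%nat /\ A 2%nat 0%nat = A 0%nat 2%nat /\ A 2%nat 1%nat = A 1%nat 2%nat.
Proof. intros H. repeat split; apply H; lia. Qed.

Lemma antisym3_entries (A : mat) : antisym3 A ->
  A 0%nat 0%nat = 0 /\ A 1%nat 1%nat = 0 /\ A 2%nat 2%nat = 0 /\
  A 1%nat 0%nat = - A 0%nat 1%nat /\ A 2%nat 0%nat = - A 0%nat 2%nat /\
  A 2%nat 1%nat = - A 1%nat 2%nat.
Proof.
  intros H.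
  pose proof (H 0%nat 0%nat ltac:(lia) ltac:(lia)). pose proof (H 1%nat 1%nat ltac:(lia) ltac:(lia)).
  pose proof (H 2%nat 2%nat ltac:(lia) ltac:(lia)).
  repeat split; try lra; apply H; lia.
Qed.

Lemma C_antisym_slice (C : sconst) k : C_antisym C -> (k < 3)%nat -> antisym3 (C k).
Proof. intros H Hk i j Hi Hj. apply H; auto. Qed.

Ltac rewrite_sym3 A H := let a := fresh in let b := fresh in let c := fresh in
  destruct (sym3_entries A H) as [a [b c]]; rewrite ?a, ?b, ?c in *; clear a b c.
Ltac rewrite_antisym3 A H :=
  let a1 := fresh in let a2 := fresh in let a3 := fresh in
  let a4 := fresh in let a5 := fresh in let a6 := fresh in
  destruct (antisym3_entries A H) as [a1 [a2 [a3 [a4 [a5 a6]]]]];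
  rewrite ?a1, ?a2, ?a3, ?a4, ?a5, ?a6 in *; clear a1 a2 a3 a4 a5 a6.
Ltac rewrite_C_antisym C H :=
  rewrite_antisym3 (C 0%nat) (C_antisym_slice C 0%nat H ltac:(lia));
  rewrite_antisym3 (C 1%nat) (C_antisym_slice C 1%nat H ltac:(lia));
  rewrite_antisym3 (C 2%nat) (C_antisym_slice C 2%nat H ltac:(lia)).

Definition cofactor3 (g : mat) : mat := fun i j =>
  let a := g 0%nat 0%nat in let b := g 0%nat 1%nat in let c := g 0%nat 2%nat in
  let d := g 1%nat 1%nat in let e := g 1%nat 2%nat in let f := g 2%nat 2%nat in
  match i, j with
  | O, O => d * f - e * e | O, S O => c * e - b * f | O, S (S O) => b * e - c * d
  | S O, O => c * e - b * f | S O, S O => a * f - c * c | S O, S (S O) => b * c - a * e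
  | S (S O), O => b * e - c * d | S (S O), S O => b * c - a * e
  | S (S O), S (S O) => a * d - b * b | _, _ => 0
  end.

Ltac field_det Hd :=
  field; try (let Hz := fresh in intro Hz; apply Hd; clear - Hz; first [lra | nra]).

Lemma ginv_cofactor g i j : sym3 g -> det3 g <> 0 -> (i < 3)%nat -> (j < 3)%nat ->
  ginv g i j = cofactor3 g i j / det3 g.
Proof.
  intros Hs Hd Hi Hj. unfold ginv, det3, sum3, eps3 in *. cbv beta iota in *.
  destruct i as [|[|[|]]]; destruct j as [|[|[|]]]; try lia;
    unfold cofactor3, sum3, eps3; cbv beta iota; rewrite_sym3 g Hs; field_det Hd.
Qed.

Ltac expand_ginv :=
  repeat (rewrite ginv_cofactor by (auto; lia));
  unfold cofactor3, det3, sum3, eps3, kdelta; cbv beta iota zeta delta [Nat.eqb].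
Ltac expand_det g Hs Hd := unfold det3, sum3, eps3 in Hd; cbv beta iota in Hd; rewrite_sym3 g Hs.

Lemma qform_unit3 A i : (i < 3)%nat -> qform A (unit3 i) (unit3 i) = A i i.
Proof. intros Hi. unfold qform, unit3, sum3. destruct i as [|[|[|]]]; try lia; simpl; ring. Qed.

Lemma qform_unit3_l A i v : (i < 3)%nat -> qform A (unit3 i) v = sum3 (fun j => A i j * v j).
Proof. intros Hi. unfold qform, unit3, sum3. destruct i as [|[|[|]]]; try lia; simpl; ring. Qed.

Lemma qform_unit3_unit3 A i j : (i < 3)%nat -> (j < 3)%nat -> qform A (unit3 i) (unit3 j) = A i j.
Proof.
  intros Hi Hj. unfold qform, unit3, sum3.
  destruct i as [|[|[|]]]; destruct j as [|[|[|]]]; try lia; simpl; ring.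
Qed.

Lemma qform_unit3_sum A i j : (i < 3)%nat -> (j < 3)%nat ->
  qform A (fun k => unit3 i k + unit3 j k) (fun k => unit3 i k + unit3 j k)
  = A i i + A i j + A j i + A j j.
Proof.
  intros Hi Hj. unfold qform, unit3, sum3.
  destruct i as [|[|[|]]]; destruct j as [|[|[|]]]; try lia; simpl; ring.
Qed.

Lemma unit3_nonzero i : (i < 3)%nat -> nonzero3 (unit3 i).
Proof. intros Hi. unfold nonzero3, unit3. destruct i as [|[|[|]]]; try lia; simpl; lra. Qed.

Lemma posdef3_qform_nonneg g v : posdef3 g -> 0 <= qform g v v.
Proof.
  intros H.
  destruct (Req_dec (v 0%nat) 0); destruct (Req_dec (v 1%nat) 0); destruct (Req_dec (v 2%nat) 0).
  1: unfold qform, sum3; rewrite H0, H1, H2; lra.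
  all: apply Rlt_le, H; tauto.
Qed.

Lemma posdef3_diag_pos g i : posdef3 g -> (i < 3)%nat -> 0 < g i i.
Proof. intros Hp Hi. rewrite <- qform_unit3 by exact Hi. apply Hp, unit3_nonzero, Hi. Qed.

Lemma posdef3_leading_minors g : sym3 g -> posdef3 g ->
  0 < g 0%nat 0%nat /\ 0 < g 0%nat 0%nat * g 1%nat 1%nat - g 0%nat 1%nat * g 0%nat 1%nat /\
  0 < det3 g.
Proof.
  intros Hs Hp.
  pose proof (posdef3_diag_pos g 0 Hp ltac:(lia)) as H1.
  set (m2 := g 0%nat 0%nat * g 1%nat 1%nat - g 0%nat 1%nat * g 0%nat 1%nat).
  assert (H2 : 0 < m2).
  { set (v := fun k => match k with O => g 0%nat 1%nat | S O => - g 0%nat 0%nat | _ => 0 end).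
    pose proof (Hp v ltac:(right; left; unfold v; lra)) as Hv.
    assert (E : qform g v v = g 0%nat 0%nat * m2).
    { unfold qform, v, m2, sum3. cbv beta iota. rewrite_sym3 g Hs. ring. }
    unfold qform in E. rewrite E in Hv. nra. }
  repeat split; auto.
  set (v := fun k => cofactor3 g k 2%nat).
  pose proof (Hp v ltac:(right; right; unfold v, cofactor3; simpl; fold m2; lra)) as Hv.
  assert (E : qform g v v = det3 g * m2).
  { unfold qform, v, det3, sum3, eps3, cofactor3, m2. cbv beta iota zeta. rewrite_sym3 g Hs. ring. }
  unfold qform in E. rewrite E in Hv. nra.
Qed.

Lemma quadratic_nonneg_discriminant A B Cc :
  0 <= A -> (forall s, 0 <= A * s * s - 2 * B * s + Cc) -> B * B <= A * Cc.
Proof.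
  intros HA H. destruct (Req_dec A 0) as [-> | HA0].
  - destruct (Req_dec B 0) as [-> | HB]; [pose proof (H 0); lra |].
    pose proof (H ((Cc + 1) / (2 * B))) as H1.
    replace (0 * ((Cc + 1) / (2 * B)) * ((Cc + 1) / (2 * B)) - 2 * B * ((Cc + 1) / (2 * B)) + Cc)
      with (-1) in H1 by (field; auto).
    lra.
  - pose proof (H (B / A)) as H1.
    replace (A * (B / A) * (B / A) - 2 * B * (B / A) + Cc) with (Cc - B * B / A) in H1
      by (field; auto).
    apply Rmult_le_reg_r with (/ A); [apply Rinv_0_lt_compat; lra |].
    replace (A * Cc * / A) with Cc by (field; auto).
    unfold Rdiv in H1. lra.
Qed.

Lemma qform_cauchy_schwarz g v w : sym3 g -> posdef3 g ->
  qform g v w * qform g v w <= qform g v v * qform g w w.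
Proof.
  intros Hs Hp. rewrite (Rmult_comm (qform g v v)).
  apply quadratic_nonneg_discriminant; [apply posdef3_qform_nonneg; auto |].
  intros s. pose proof (posdef3_qform_nonneg g (fun k => s * w k - v k) Hp).
  replace (qform g w w * s * s - 2 * qform g v w * s + qform g v v)
    with (qform g (fun k => s * w k - v k) (fun k => s * w k - v k)); auto.
  unfold qform, sum3. rewrite_sym3 g Hs. ring.
Qed.

Definition sum33 (x : nat -> nat -> R) : R := sum3 (fun i => sum3 (fun j => x i j)).

Lemma sum33_squares_nonneg x : 0 <= sum33 (fun i j => x i j * x i j).
Proof. unfold sum33, sum3. repeat apply Rplus_le_le_0_compat; apply Rle_0_sqr. Qed.

Lemma sum33_cauchy_schwarz (x y : nat -> nat -> R) :
  sum33 (fun i j => x i j * y i j) * sum33 (fun i j => x i j * y i j)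
  <= sum33 (fun i j => x i j * x i j) * sum33 (fun i j => y i j * y i j).
Proof.
  rewrite (Rmult_comm (sum33 (fun i j => x i j * x i j))).
  apply quadratic_nonneg_discriminant; [apply sum33_squares_nonneg |].
  intros s.
  replace (sum33 (fun i j => y i j * y i j) * s * s - 2 * sum33 (fun i j => x i j * y i j) * s
           + sum33 (fun i j => x i j * x i j))
    with (sum33 (fun i j => (s * y i j - x i j) * (s * y i j - x i j))) by (unfold sum33, sum3; ring).
  apply sum33_squares_nonneg.
Qed.

Definition lower3 (l00 l10 l11 l20 l21 l22 : R) : mat := fun i j =>
  match i, j with
  | O, O => l00 | S O, O => l10 | S O, S O => l11
  | S (S O), O => l20 | S (S O), S O => l21 | S (S O), S (S O) => l22 | _, _ => 0
  end.

Definition lower3_inv (l00 l10 l11 l20 l21 l22 : R) : mat := fun i j =>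
  match i, j with
  | O, O => 1 / l00 | S O, O => - l10 / (l00 * l11) | S O, S O => 1 / l11
  | S (S O), O => (l10 * l21 - l11 * l20) / (l00 * l11 * l22)
  | S (S O), S O => - l21 / (l11 * l22) | S (S O), S (S O) => 1 / l22 | _, _ => 0
  end.

Definition cholesky3 (P : mat) (l00 l10 l11 l20 l21 l22 : R) : Prop :=
  0 < l00 /\ 0 < l11 /\ 0 < l22 /\
  forall i j, (i < 3)%nat -> (j < 3)%nat ->
    P i j = sum3 (fun k => lower3 l00 l10 l11 l20 l21 l22 i k * lower3 l00 l10 l11 l20 l21 l22 j k).

Lemma cholesky3_exists (P : mat) : sym3 P -> 0 < P 0%nat 0%nat ->
  0 < P 0%nat 0%nat * P 1%nat 1%nat - P 0%nat 1%nat * P 0%nat 1%nat -> 0 < det3 P ->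
  exists l00 l10 l11 l20 l21 l22, cholesky3 P l00 l10 l11 l20 l21 l22.
Proof.
  intros Hs Ha Hm Hd.
  set (a := P 0%nat 0%nat) in *. set (b := P 0%nat 1%nat) in *. set (c := P 0%nat 2%nat).
  set (d := P 1%nat 1%nat) in *. set (e := P 1%nat 2%nat). set (f := P 2%nat 2%nat).
  assert (Hdet : det3 P = a * (d * f - e * e) - b * (b * f - e * c) + c * (b * e - d * c)).
  { unfold det3, sum3, eps3. cbv beta iota. rewrite_sym3 P Hs. unfold a, b, c, d, e, f. ring. }
  set (r1 := sqrt a). assert (Hr1 : r1 * r1 = a) by (apply sqrt_sqrt; lra).
  assert (Hr1p : 0 < r1) by (apply sqrt_lt_R0; lra).
  set (l10 := b / r1). set (l20 := c / r1).
  set (q := d - l10 * l10).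
  assert (Hq : q = (a * d - b * b) / a).
  { unfold q, l10. replace (b / r1 * (b / r1)) with (b * b / (r1 * r1)) by (field; lra).
    rewrite Hr1. field. lra. }
  assert (Hqp : 0 < q) by (rewrite Hq; apply Rdiv_lt_0_compat; lra).
  set (r2 := sqrt q). assert (Hr2 : r2 * r2 = q) by (apply sqrt_sqrt; lra).
  assert (Hr2p : 0 < r2) by (apply sqrt_lt_R0; lra).
  set (l21 := (e - l20 * l10) / r2).
  set (s := f - l20 * l20 - l21 * l21).
  assert (E20 : l20 * l20 = c * c / a) by (unfold l20; rewrite <- Hr1; field; lra).
  assert (E10 : l20 * l10 = c * b / a) by (unfold l20, l10; rewrite <- Hr1; field; lra).
  assert (E21 : l21 * l21 = (e - c * b / a) * (e - c * b / a) / q)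
    by (unfold l21; rewrite <- Hr2, E10; field; lra).
  assert (Hs' : s = det3 P / (a * d - b * b))
    by (unfold s; rewrite E20, E21, Hq, Hdet; field; split; lra).
  assert (Hsp : 0 < s) by (rewrite Hs'; apply Rdiv_lt_0_compat; lra).
  set (r3 := sqrt s). assert (Hr3 : r3 * r3 = s) by (apply sqrt_sqrt; lra).
  assert (Hr3p : 0 < r3) by (apply sqrt_lt_R0; lra).
  exists r1, l10, r2, l20, l21, r3. repeat split; auto.
  intros i j Hi Hj.
  destruct i as [|[|[|]]]; destruct j as [|[|[|]]]; try lia; unfold sum3, lower3; cbv beta iota;
    try (rewrite_sym3 P Hs); fold a b c d e f.
  - lra.
  - unfold l10. field. lra.
  - unfold l20. field. lra.
  - unfold l10. field. lra.
  - rewrite Hr2. unfold q. ring.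
  - replace (r2 * l21) with (e - l20 * l10) by (unfold l21; field; lra). ring.
  - unfold l20. field. lra.
  - replace (l21 * r2) with (e - l20 * l10) by (unfold l21; field; lra). ring.
  - rewrite Hr3. unfold s. ring.
Qed.

Lemma posdef3_cholesky g : sym3 g -> posdef3 g ->
  exists l00 l10 l11 l20 l21 l22, cholesky3 g l00 l10 l11 l20 l21 l22.
Proof.
  intros Hs Hp. destruct (posdef3_leading_minors g Hs Hp) as [Ha [Hm Hd]].
  apply cholesky3_exists; auto.
Qed.

Lemma cholesky3_det g l00 l10 l11 l20 l21 l22 : cholesky3 g l00 l10 l11 l20 l21 l22 ->
  det3 g = (l00 * l11 * l22) * (l00 * l11 * l22).
Proof.
  intros [_ [_ [_ HL]]]. unfold det3, sum3. rewrite !HL by lia.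
  unfold eps3, sum3, lower3. cbv beta iota. ring.
Qed.

Lemma cholesky3_ginv g l00 l10 l11 l20 l21 l22 : sym3 g -> cholesky3 g l00 l10 l11 l20 l21 l22 ->
  forall i j, (i < 3)%nat -> (j < 3)%nat ->
  ginv g i j = sum3 (fun k => lower3_inv l00 l10 l11 l20 l21 l22 k i
                              * lower3_inv l00 l10 l11 l20 l21 l22 k j).
Proof.
  intros Hs Hc i j Hi Hj. pose proof (cholesky3_det _ _ _ _ _ _ _ Hc) as Hd.
  destruct Hc as [H0 [H1 [H2 HL]]].
  assert (Hd0 : det3 g <> 0).
  { rewrite Hd. apply Rgt_not_eq. repeat apply Rmult_lt_0_compat; lra. }
  rewrite ginv_cofactor, Hd by auto. unfold cofactor3. rewrite !HL by lia.
  destruct i as [|[|[|]]]; destruct j as [|[|[|]]]; try lia;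
    unfold sum3, lower3, lower3_inv; cbv beta iota; field; lra.
Qed.

Lemma ginv_qform_nonneg g a : sym3 g -> posdef3 g -> 0 <= qform (ginv g) a a.
Proof.
  intros Hs Hp. destruct (posdef3_cholesky g Hs Hp) as [l00 [l10 [l11 [l20 [l21 [l22 Hc]]]]]].
  pose proof (cholesky3_ginv g _ _ _ _ _ _ Hs Hc) as HG.
  set (M := lower3_inv l00 l10 l11 l20 l21 l22).
  replace (qform (ginv g) a a)
    with (sum3 (fun k => sum3 (fun i => M k i * a i) * sum3 (fun i => M k i * a i))).
  - unfold sum3. repeat apply Rplus_le_le_0_compat; apply Rle_0_sqr.
  - unfold qform, sum3. rewrite !HG by lia. unfold sum3. fold M. ring.
Qed.

Definition Knorm2 (g K : mat) : R := sum3 (fun i => sum3 (fun j => K i j * Kuu g K i j)).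

(* In a [g]-orthonormal frame [K^{ij}K_{ij}] is a Frobenius norm and [K(v,v)] a frame product. *)
Lemma qform_sq_le_Knorm2 g K v : sym3 g -> posdef3 g -> sym3 K ->
  0 <= Knorm2 g K /\ qform K v v * qform K v v <= Knorm2 g K * (qform g v v * qform g v v).
Proof.
  intros Hs Hp HK. destruct (posdef3_cholesky g Hs Hp) as [l00 [l10 [l11 [l20 [l21 [l22 Hc]]]]]].
  pose proof (cholesky3_ginv g _ _ _ _ _ _ Hs Hc) as HG.
  set (M := lower3_inv l00 l10 l11 l20 l21 l22).
  set (L := lower3 l00 l10 l11 l20 l21 l22).
  set (Kh := fun a b => sum3 (fun i => sum3 (fun j => M a i * K i j * M b j))).
  set (yh := fun a => sum3 (fun i => L i a * v i)).
  assert (E1 : Knorm2 g K = sum33 (fun a b => Kh a b * Kh a b)).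
  { unfold Knorm2, Kuu, sum3. rewrite !HG by lia. unfold Kh, sum33, sum3. fold M.
    rewrite_sym3 K HK. ring. }
  destruct Hc as [H0 [H1 [H2 HL]]].
  assert (E2 : qform K v v = sum33 (fun a b => Kh a b * (yh a * yh b))).
  { unfold qform, Kh, yh, sum33, sum3, M, L, lower3_inv, lower3. cbv beta iota.
    rewrite_sym3 K HK. field. lra. }
  assert (E3 : qform g v v * qform g v v = sum33 (fun a b => (yh a * yh b) * (yh a * yh b))).
  { unfold qform, sum3. rewrite !HL by lia. unfold yh, sum33, sum3, L. ring. }
  split; [rewrite E1; apply sum33_squares_nonneg |].
  rewrite E1, E2, E3. apply sum33_cauchy_schwarz.
Qed.

(** * Nonpositive scalar curvature for Bianchi types I-VIII *)

Definition tr3 (S : mat) : R := sum3 (fun i => S i i).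
Definition tr3_sq (S : mat) : R := sum3 (fun i => sum3 (fun j => S i j * S j i)).
Definition conj3 (H S : mat) : mat := fun a b => sum3 (fun i => sum3 (fun j => H a i * S i j * H j b)).
Definition involutive3 (H : mat) : Prop :=
  forall i j, (i < 3)%nat -> (j < 3)%nat -> sum3 (fun k => H i k * H k j) = kdelta i j.
Definition norm3_sq (y : vec) : R := sum3 (fun i => y i * y i).

Lemma norm3_sq_nonneg y : 0 <= norm3_sq y.
Proof. unfold norm3_sq, sum3. repeat apply Rplus_le_le_0_compat; apply Rle_0_sqr. Qed.

Lemma sum_sq3_eq0 a b c : a * a + b * b + c * c = 0 -> a = 0 /\ b = 0 /\ c = 0.
Proof.
  intros H. pose proof (Rle_0_sqr a). pose proof (Rle_0_sqr b). pose proof (Rle_0_sqr c).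
  unfold Rsqr in *. repeat split; apply Rsqr_0_uniq; unfold Rsqr; lra.
Qed.

(* The gap is [3 S_00^2 + (S_11 - S_22)^2 + 4 (S_01^2 + S_02^2 + S_12^2)]. *)
Lemma trace_quadratic_bound_unit S : sym3 S ->
  tr3 S * tr3 S - 2 * tr3_sq S <= 2 * tr3 S * S 0%nat 0%nat.
Proof.
  intros Hs. unfold tr3, tr3_sq, sum3. rewrite_sym3 S Hs.
  pose proof (Rle_0_sqr (S 0%nat 0%nat)). pose proof (Rle_0_sqr (S 1%nat 1%nat - S 2%nat 2%nat)).
  pose proof (Rle_0_sqr (S 0%nat 1%nat)). pose proof (Rle_0_sqr (S 0%nat 2%nat)).
  pose proof (Rle_0_sqr (S 1%nat 2%nat)). unfold Rsqr in *. nra.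
Qed.

Lemma conj3_traces H S : involutive3 H ->
  tr3 (conj3 H S) = tr3 S /\ tr3_sq (conj3 H S) = tr3_sq S.
Proof.
  intros HH. set (hh := fun i j => sum3 (fun k => H i k * H k j)).
  assert (HH' : forall i j, (i < 3)%nat -> (j < 3)%nat -> hh i j = kdelta i j) by exact HH.
  split.
  - transitivity (sum3 (fun i => sum3 (fun j => S i j * hh j i)));
      [unfold tr3, conj3, hh, sum3; ring |].
    unfold sum3. rewrite !HH' by lia. unfold kdelta, tr3, sum3. simpl. ring.
  - transitivity (sum3 (fun i => sum3 (fun j => sum3 (fun k => sum3 (fun l =>
        S i j * hh j k * S k l * hh l i)))));
      [unfold tr3_sq, conj3, hh, sum3; ring |].
    unfold sum3. rewrite !HH' by lia. unfold kdelta, tr3_sq, sum3. simpl. ring.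
Qed.

Lemma kdelta_sum3 i (y : vec) : (i < 3)%nat -> sum3 (fun k => kdelta i k * y k) = y i.
Proof. intros Hi. unfold sum3, kdelta. destruct i as [|[|[|]]]; try lia; simpl; ring. Qed.

(* A Householder reflection (or the identity) maps [|y| e_0] to [y]. *)
Lemma reflection_to_unit3 (y : vec) : exists H, sym3 H /\ involutive3 H /\
  forall i, (i < 3)%nat -> y i = sqrt (norm3_sq y) * H i 0%nat.
Proof.
  set (r := sqrt (norm3_sq y)).
  assert (Hr : r * r = norm3_sq y) by (apply sqrt_sqrt, norm3_sq_nonneg).
  set (v := fun i => match i with O => y 0%nat - r | _ => y i end).
  set (c := norm3_sq v / 2).
  destruct (Req_dec c 0) as [Hc | Hc].
  - exists kdelta. repeat split.
    + intros i j _ _. unfold kdelta. rewrite Nat.eqb_sym. reflexivity.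
    + intros i j Hi Hj. unfold kdelta, sum3.
      destruct i as [|[|[|]]]; destruct j as [|[|[|]]]; try lia; simpl; ring.
    + assert (Hv : norm3_sq v = 0) by (unfold c in Hc; lra).
      unfold norm3_sq, v, sum3 in Hv. apply sum_sq3_eq0 in Hv as [Hy0 [Hy1 Hy2]].
      intros i Hi. unfold kdelta. destruct i as [|[|[|]]]; try lia; simpl; lra.
  - set (H := fun i j => kdelta i j - v i * v j / c).
    assert (Hvy : sum3 (fun i => v i * y i) = c).
    { unfold c, norm3_sq, v, sum3. cbv beta iota. unfold norm3_sq, sum3 in Hr. nra. }
    assert (Hc' : v 0%nat * v 0%nat + v 1%nat * v 1%nat + v 2%nat * v 2%nat <> 0)
      by (intro Z; apply Hc; unfold c, norm3_sq, sum3; rewrite Z; field).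
    assert (Hinv : involutive3 H).
    { intros i j Hi Hj. unfold H, c, norm3_sq, sum3.
      destruct i as [|[|[|]]]; destruct j as [|[|[|]]]; try lia;
        unfold kdelta; cbv beta iota delta [Nat.eqb]; field; intro Z; apply Hc'; nra. }
    exists H. repeat split; [| exact Hinv |].
    + intros i j _ _. unfold H, kdelta. rewrite Nat.eqb_sym. field. exact Hc.
    + assert (HHy : forall i, (i < 3)%nat -> sum3 (fun k => H i k * y k) = r * kdelta i 0).
      { intros i Hi. unfold H.
        replace (sum3 (fun k => (kdelta i k - v i * v k / c) * y k))
          with (sum3 (fun k => kdelta i k * y k) - v i * sum3 (fun k => v k * y k) / c)
          by (unfold sum3; field; auto).
        rewrite Hvy, kdelta_sum3 by exact Hi.
        unfold kdelta, v. destruct i as [|[|[|]]]; try lia; simpl; field; auto. }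
      intros i Hi. fold r.
      transitivity (sum3 (fun k => sum3 (fun j => H i j * H j k) * y k)).
      { rewrite <- kdelta_sum3 by exact Hi. apply sum3_ext. intros k Hk.
        rewrite Hinv by assumption. reflexivity. }
      transitivity (sum3 (fun j => H i j * sum3 (fun k => H j k * y k))); [unfold sum3; ring |].
      transitivity (sum3 (fun j => H i j * (r * kdelta j 0))).
      { apply sum3_ext. intros k Hk. rewrite HHy by exact Hk. reflexivity. }
      unfold sum3, kdelta. simpl. ring.
Qed.

Lemma trace_quadratic_bound S y : sym3 S ->
  (tr3 S * tr3 S - 2 * tr3_sq S) * norm3_sq y <= 2 * tr3 S * qform S y y.
Proof.
  intros Hs. destruct (reflection_to_unit3 y) as [H [Hsym [Hinv Hy]]].
  set (r := sqrt (norm3_sq y)) in Hy.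
  assert (Hr : r * r = norm3_sq y) by (apply sqrt_sqrt, norm3_sq_nonneg).
  assert (Hs' : sym3 (conj3 H S)).
  { intros a b Ha Hb. unfold conj3, sum3. rewrite_sym3 S Hs.
    rewrite (Hsym a 0%nat), (Hsym a 1%nat), (Hsym a 2%nat),
      (Hsym 0%nat b), (Hsym 1%nat b), (Hsym 2%nat b) by lia.
    ring. }
  pose proof (trace_quadratic_bound_unit _ Hs') as Hunit.
  destruct (conj3_traces H S Hinv) as [Etr Etr2]. rewrite Etr, Etr2 in Hunit.
  assert (Eq : qform S y y = r * r * conj3 H S 0%nat 0%nat).
  { unfold qform, sum3. rewrite !(Hy _) by lia. unfold conj3, sum3.
    rewrite (Hsym 1%nat 0%nat), (Hsym 2%nat 0%nat) by lia. rewrite_sym3 S Hs. ring. }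
  rewrite Eq, <- Hr.
  assert (0 <= r * r) by apply Rle_0_sqr.
  replace (2 * tr3 S * (r * r * conj3 H S 0%nat 0%nat))
    with (2 * tr3 S * conj3 H S 0%nat 0%nat * (r * r)) by ring.
  apply Rmult_le_compat_r; assumption.
Qed.

(* Milnor's decomposition [C^k_{ij} = eps_{ijl} n^{lk} + delta^k_j a_i - delta^k_i a_j]. *)
Definition milnor_m (C : sconst) (l k : nat) : R :=
  (1/2) * sum3 (fun i => sum3 (fun j => eps3 l i j * C k i j)).
Definition milnor_n (C : sconst) (l k : nat) : R := (milnor_m C l k + milnor_m C k l) / 2.
Definition milnor_a (C : sconst) (i : nat) : R := (1/2) * sum3 (fun k => C k i k).
Definition milnor_ng (C : sconst) (g : mat) (i j : nat) : R := sum3 (fun k => milnor_n C i k * g k j).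
Definition tr_ng (C : sconst) (g : mat) : R := sum3 (fun i => milnor_ng C g i i).
Definition tr_ng_sq (C : sconst) (g : mat) : R :=
  sum3 (fun i => sum3 (fun j => milnor_ng C g i j * milnor_ng C g j i)).
Definition Rsc_det_milnor (C : sconst) (g : mat) : R :=
  (tr_ng C g ^ 2 - 2 * tr_ng_sq C g) / 2
  - 6 * det3 g * qform (ginv g) (milnor_a C) (milnor_a C).

Lemma milnor_n_sym C : sym3 (milnor_n C).
Proof. intros i j _ _. unfold milnor_n. field. Qed.

Lemma milnor_decomposition C : C_antisym C -> forall k i j, (k < 3)%nat -> (i < 3)%nat -> (j < 3)%nat ->
  C k i j = sum3 (fun l => eps3 i j l * milnor_n C l k)
            + kdelta k j * milnor_a C i - kdelta k i * milnor_a C j.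
Proof.
  intros HC k i j Hk Hi Hj.
  destruct k as [|[|[|]]]; destruct i as [|[|[|]]]; destruct j as [|[|[|]]]; try lia;
    unfold milnor_n, milnor_m, milnor_a, sum3, eps3, kdelta; cbv beta iota delta [Nat.eqb];
    rewrite_C_antisym C HC; field.
Qed.

Lemma jacobi_milnor_n_a C : C_antisym C -> C_jacobi C ->
  forall l, (l < 3)%nat -> sum3 (fun m => milnor_n C l m * milnor_a C m) = 0.
Proof.
  intros HC HJ l Hl. pose proof (HJ 0%nat 1%nat 2%nat l ltac:(lia) ltac:(lia) ltac:(lia) Hl) as J.
  transitivity (/ 2 * sum3 (fun m => C m 0%nat 1%nat * C l m 2%nat + C m 1%nat 2%nat * C l m 0%nat
                                     + C m 2%nat 0%nat * C l m 1%nat)).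
  - destruct l as [|[|[|]]]; try lia;
      unfold milnor_n, milnor_m, milnor_a, sum3, eps3; cbv beta iota; rewrite_C_antisym C HC; field.
  - rewrite J. ring.
Qed.

(* Generic symmetric [g] and antisymmetric [C], written with independent entries so that
   [field] can verify the curvature identity. *)
Definition mat_sym3 (a b c d e f : R) : mat := fun i j =>
  match i, j with
  | O, O => a | O, S O => b | O, S (S O) => c | S O, O => b | S O, S O => d | S O, S (S O) => e
  | S (S O), O => c | S (S O), S O => e | S (S O), S (S O) => f | _, _ => 0
  end.
Definition sconst_antisym (x : nat -> R) : sconst := fun k i j =>
  match i, j with
  | O, S O => x (3 * k)%nat | S O, O => - x (3 * k)%nat
  | O, S (S O) => x (3 * k + 1)%nat | S (S O), O => - x (3 * k + 1)%nat
  | S O, S (S O) => x (3 * k + 2)%nat | S (S O), S O => - x (3 * k + 2)%nat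
  | _, _ => 0
  end.
Definition det_sym3 a b c d e f := a * (d * f - e * e) - b * (b * f - e * c) + c * (b * e - d * c).

Lemma det3_mat_sym3 a b c d e f : det3 (mat_sym3 a b c d e f) = det_sym3 a b c d e f.
Proof. unfold det3, sum3, eps3, mat_sym3, det_sym3. ring. Qed.

Lemma ginv_mat_sym3 a b c d e f i j : det_sym3 a b c d e f <> 0 -> (i < 3)%nat -> (j < 3)%nat ->
  ginv (mat_sym3 a b c d e f) i j
  = mat_sym3 (d * f - e * e) (c * e - b * f) (b * e - c * d) (a * f - c * c) (b * c - a * e)
      (a * d - b * b) i j / det_sym3 a b c d e f.
Proof.
  intros Hd Hi Hj. unfold ginv. rewrite det3_mat_sym3.
  destruct i as [|[|[|]]]; destruct j as [|[|[|]]]; try lia;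
    unfold sum3, eps3, mat_sym3; cbv beta iota; field; exact Hd.
Qed.

Lemma Rsc_det_mat_sym3 (x : nat -> R) a b c d e f : det_sym3 a b c d e f <> 0 ->
  Rsc (sconst_antisym x) (mat_sym3 a b c d e f) * det3 (mat_sym3 a b c d e f)
  = Rsc_det_milnor (sconst_antisym x) (mat_sym3 a b c d e f).
Proof.
  intros Hd.
  unfold Rsc_det_milnor, qform, Rsc, Ric, gam, tr_ng_sq, tr_ng, milnor_ng, milnor_n, milnor_m,
    milnor_a, sum3.
  rewrite !ginv_mat_sym3 by (auto; lia). rewrite det3_mat_sym3.
  unfold eps3, sconst_antisym, mat_sym3. cbv beta iota. cbn [Nat.mul Nat.add].
  unfold det_sym3 in *. field. exact Hd.
Qed.

Definition mat_eq3 (g g' : mat) := forall i j, (i < 3)%nat -> (j < 3)%nat -> g i j = g' i j.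
Definition sconst_eq3 (C C' : sconst) :=
  forall k i j, (k < 3)%nat -> (i < 3)%nat -> (j < 3)%nat -> C k i j = C' k i j.

Ltac sum3_congr := repeat (apply sum3_ext; intros ? ?).

Lemma det3_ext g g' : mat_eq3 g g' -> det3 g = det3 g'.
Proof. intros H. unfold det3. sum3_congr. rewrite !H by lia. reflexivity. Qed.

Lemma ginv_ext g g' : mat_eq3 g g' -> mat_eq3 (ginv g) (ginv g').
Proof.
  intros H i j Hi Hj. unfold ginv. rewrite (det3_ext g g' H). f_equal.
  sum3_congr. rewrite !H by lia. reflexivity.
Qed.

Lemma gam_ext C C' g g' l i j : sconst_eq3 C C' -> mat_eq3 g g' ->
  (l < 3)%nat -> (i < 3)%nat -> (j < 3)%nat -> gam C g l i j = gam C' g' l i j.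
Proof.
  intros HC H Hl Hi Hj. pose proof (ginv_ext g g' H) as HG. unfold gam, sum3.
  rewrite !HG, !HC, !H by lia. reflexivity.
Qed.

Lemma Rsc_ext C C' g g' : sconst_eq3 C C' -> mat_eq3 g g' -> Rsc C g = Rsc C' g'.
Proof.
  intros HC H. pose proof (ginv_ext g g' H) as HG. unfold Rsc, Ric, sum3.
  rewrite !HG by lia. rewrite !(gam_ext C C' g g') by (auto; lia). rewrite !HC by lia. reflexivity.
Qed.

Lemma Rsc_det_milnor_ext C C' g g' : sconst_eq3 C C' -> mat_eq3 g g' ->
  Rsc_det_milnor C g = Rsc_det_milnor C' g'.
Proof.
  intros HC H. pose proof (ginv_ext g g' H) as HG.
  unfold Rsc_det_milnor, qform, tr_ng_sq, tr_ng, milnor_ng, milnor_n, milnor_m, milnor_a, sum3.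
  rewrite (det3_ext g g' H). rewrite !HG, !HC, !H by lia. reflexivity.
Qed.

Lemma Rsc_mul_det C g : C_antisym C -> sym3 g -> det3 g <> 0 ->
  Rsc C g * det3 g = Rsc_det_milnor C g.
Proof.
  intros HC Hs Hd.
  set (x := fun n => match n with
     | 0%nat => C 0%nat 0%nat 1%nat | 1%nat => C 0%nat 0%nat 2%nat | 2%nat => C 0%nat 1%nat 2%nat
     | 3%nat => C 1%nat 0%nat 1%nat | 4%nat => C 1%nat 0%nat 2%nat | 5%nat => C 1%nat 1%nat 2%nat
     | 6%nat => C 2%nat 0%nat 1%nat | 7%nat => C 2%nat 0%nat 2%nat | _ => C 2%nat 1%nat 2%nat end).
  set (g' := mat_sym3 (g 0%nat 0%nat) (g 0%nat 1%nat) (g 0%nat 2%nat) (g 1%nat 1%nat) (g 1%nat 2%nat)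
                      (g 2%nat 2%nat)).
  assert (Eg : mat_eq3 g g').
  { intros i j Hi Hj. unfold g', mat_sym3.
    destruct i as [|[|[|]]]; destruct j as [|[|[|]]]; try lia; auto; apply Hs; lia. }
  assert (EC : sconst_eq3 C (sconst_antisym x)).
  { intros k i j Hk Hi Hj.
    destruct (antisym3_entries (C k) (C_antisym_slice C k HC Hk)) as [a1 [a2 [a3 [a4 [a5 a6]]]]].
    unfold sconst_antisym, x.
    destruct k as [|[|[|]]]; destruct i as [|[|[|]]]; destruct j as [|[|[|]]]; try lia;
      cbn [Nat.mul Nat.add]; auto. }
  rewrite (Rsc_ext C (sconst_antisym x) g g' EC Eg),
    (Rsc_det_milnor_ext C (sconst_antisym x) g g' EC Eg),
    (det3_ext g g' Eg).
  apply Rsc_det_mat_sym3. rewrite <- det3_mat_sym3. fold g'. rewrite <- (det3_ext g g' Eg). exact Hd.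
Qed.

(* With [a = 0] and [s n = L L^T], the frame [L / (s det L)] puts [C] in the form [eps]. *)
Lemma bianchi_IX_of_cholesky C s l00 l10 l11 l20 l21 l22 : C_antisym C -> (s = 1 \/ s = -1) ->
  (forall i, (i < 3)%nat -> milnor_a C i = 0) ->
  cholesky3 (fun i j => s * milnor_n C i j) l00 l10 l11 l20 l21 l22 -> bianchi_IX C.
Proof.
  intros HC Hs Ha [H0 [H1 [H2 HL]]].
  set (dL := l00 * l11 * l22).
  assert (HdL : 0 < dL) by (unfold dL; repeat apply Rmult_lt_0_compat; lra).
  assert (Hn : forall i j, (i < 3)%nat -> (j < 3)%nat ->
    milnor_n C i j
    = s * sum3 (fun k => lower3 l00 l10 l11 l20 l21 l22 i k * lower3 l00 l10 l11 l20 l21 l22 j k)).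
  { intros i j Hi Hj. rewrite <- (HL i j Hi Hj). destruct Hs; subst; ring. }
  exists (fun i j => lower3 l00 l10 l11 l20 l21 l22 i j / (s * dL)).
  exists (fun i j => s * dL * lower3_inv l00 l10 l11 l20 l21 l22 i j).
  split.
  - intros i j Hi Hj. unfold dL.
    destruct i as [|[|[|]]]; destruct j as [|[|[|]]]; try lia;
      unfold sum3, lower3, lower3_inv, kdelta; cbv beta iota delta [Nat.eqb];
      destruct Hs; subst; field; repeat split; lra.
  - intros a b c Ha' Hb Hc.
    unfold sum3. rewrite !(milnor_decomposition C HC) by lia. rewrite !Ha by lia.
    unfold sum3. rewrite !Hn by lia. unfold dL.
    destruct a as [|[|[|]]]; destruct b as [|[|[|]]]; destruct c as [|[|[|]]]; try lia;
      unfold sum3, lower3, lower3_inv, kdelta, eps3; cbv beta iota delta [Nat.eqb];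
      destruct Hs; subst; field; repeat split; lra.
Qed.

Lemma definite_milnor_n_bianchi_IX C s : C_antisym C -> C_jacobi C ->
  (forall x, nonzero3 x -> 0 < s * qform (milnor_n C) x x) -> bianchi_IX C.
Proof.
  intros HC HJ Hdef.
  set (sg := if Rlt_dec 0 s then 1 else -1).
  assert (Hsg : sg = 1 \/ sg = -1) by (unfold sg; destruct (Rlt_dec 0 s); auto).
  set (n' := fun i j => sg * milnor_n C i j).
  assert (Hqn : forall v, qform n' v v = sg * qform (milnor_n C) v v)
    by (intros v; unfold n', qform, sum3; ring).
  assert (Hpn : posdef3 n').
  { intros v Hv. fold (qform n' v v). rewrite Hqn.
    pose proof (Hdef v Hv). unfold sg. destruct (Rlt_dec 0 s); nra. }
  assert (Hsn : sym3 n')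
    by (intros i j Hi Hj; unfold n'; rewrite (milnor_n_sym C i j Hi Hj); reflexivity).
  assert (Ha0 : forall i, (i < 3)%nat -> milnor_a C i = 0).
  { assert (Hz : ~ nonzero3 (milnor_a C)).
    { intro Hz. pose proof (Hpn (milnor_a C) Hz) as P. fold (qform n' (milnor_a C) (milnor_a C)) in P.
      rewrite Hqn in P.
      replace (qform (milnor_n C) (milnor_a C) (milnor_a C))
        with (sum3 (fun l => milnor_a C l * sum3 (fun m => milnor_n C l m * milnor_a C m))) in P
        by (unfold qform, sum3; ring).
      unfold sum3 at 1 in P. rewrite !(jacobi_milnor_n_a C HC HJ) in P by lia. lra. }
    intros i Hi. destruct (Req_dec (milnor_a C i) 0); auto. exfalso. apply Hz.
    destruct i as [|[|[|]]]; try lia; unfold nonzero3; auto. }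
  destruct (posdef3_cholesky n' Hsn Hpn) as [l00 [l10 [l11 [l20 [l21 [l22 Hc]]]]]].
  exact (bianchi_IX_of_cholesky C sg l00 l10 l11 l20 l21 l22 HC Hsg Ha0 Hc).
Qed.

(* Transport [trace_quadratic_bound] to [S = L^T n L], where [g = L L^T]. *)
Lemma trace_quadratic_bound_milnor C g x : sym3 g -> posdef3 g -> exists y,
  (tr_ng C g * tr_ng C g - 2 * tr_ng_sq C g) * norm3_sq y <= 2 * tr_ng C g * qform (milnor_n C) x x
  /\ (nonzero3 x -> 0 < norm3_sq y).
Proof.
  intros Hs Hp. destruct (posdef3_cholesky g Hs Hp) as [l00 [l10 [l11 [l20 [l21 [l22 Hc]]]]]].
  destruct Hc as [H0 [H1 [H2 HL]]].
  set (L := lower3 l00 l10 l11 l20 l21 l22). set (M := lower3_inv l00 l10 l11 l20 l21 l22).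
  set (S := fun a b => sum3 (fun i => sum3 (fun j => L i a * milnor_n C i j * L j b))).
  assert (HS : sym3 S).
  { intros a b _ _. unfold S, sum3. cbv beta. rewrite_sym3 (milnor_n C) (milnor_n_sym C). ring. }
  assert (E1 : tr3 S = tr_ng C g).
  { unfold tr_ng, milnor_ng, sum3. rewrite !HL by lia. unfold tr3, S, sum3, L. ring. }
  assert (E2 : tr3_sq S = tr_ng_sq C g).
  { unfold tr_ng_sq, milnor_ng, sum3. rewrite !HL by lia. unfold tr3_sq, S, sum3, L. ring. }
  set (y := fun a => sum3 (fun i => M a i * x i)).
  assert (E3 : qform S y y = qform (milnor_n C) x x).
  { unfold qform, S, y, sum3, L, M, lower3, lower3_inv. cbv beta iota. field. lra. }
  assert (Ex : forall i, (i < 3)%nat -> x i = sum3 (fun a => L i a * y a)).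
  { intros i Hi. unfold y, sum3, L, M, lower3, lower3_inv.
    destruct i as [|[|[|]]]; try lia; cbv beta iota; field; lra. }
  exists y. split.
  - rewrite <- E1, <- E2, <- E3. apply trace_quadratic_bound. exact HS.
  - intros Hx. destruct (Rle_lt_or_eq_dec 0 (norm3_sq y) (norm3_sq_nonneg y)) as [Hlt | Heq]; auto.
    exfalso. unfold norm3_sq, sum3 in Heq. symmetry in Heq.
    destruct (sum_sq3_eq0 _ _ _ Heq) as [Y0 [Y1 Y2]].
    unfold nonzero3 in Hx. rewrite (Ex 0%nat), (Ex 1%nat), (Ex 2%nat) in Hx by lia.
    unfold sum3 in Hx. rewrite Y0, Y1, Y2 in Hx. lra.
Qed.

Theorem Rsc_nonpos C g : bianchi_I_VIII C -> sym3 g -> posdef3 g -> Rsc C g <= 0.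
Proof.
  intros [HC [HJ HnIX]] Hs Hp. apply Rnot_lt_le. intro HR. apply HnIX.
  destruct (posdef3_leading_minors g Hs Hp) as [_ [_ Hd]].
  pose proof (Rsc_mul_det C g HC Hs ltac:(lra)) as Hdet.
  pose proof (ginv_qform_nonneg g (milnor_a C) Hs Hp) as Ha.
  set (s1 := tr_ng C g) in *. set (t2 := tr_ng_sq C g) in *.
  assert (Hgap : 0 < s1 * s1 - 2 * t2).
  { unfold Rsc_det_milnor in Hdet. fold s1 t2 in Hdet.
    assert (0 < Rsc C g * det3 g) by (apply Rmult_lt_0_compat; auto).
    assert (0 <= det3 g * qform (ginv g) (milnor_a C) (milnor_a C)) by (apply Rmult_le_pos; lra).
    lra. }
  apply (definite_milnor_n_bianchi_IX C s1 HC HJ).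
  intros x Hx. destruct (trace_quadratic_bound_milnor C g x Hs Hp) as [y [Hy Hy0]].
  fold s1 t2 in Hy. specialize (Hy0 Hx).
  assert (0 < (s1 * s1 - 2 * t2) * norm3_sq y) by (apply Rmult_lt_0_compat; auto).
  lra.
Qed.

(** * Algebraic identities of the system *)

Lemma det3_deriv_trace g K : sym3 g -> sym3 K -> det3 g <> 0 ->
  sum3 (fun i => sum3 (fun j => sum3 (fun k => eps3 i j k *
     (K 0%nat i * g 1%nat j * g 2%nat k + g 0%nat i * K 1%nat j * g 2%nat k
      + g 0%nat i * g 1%nat j * K 2%nat k))))
  = Hmc g K * det3 g.
Proof.
  intros Hs HK Hd. unfold Hmc, sum3. expand_ginv. expand_det g Hs Hd. rewrite_sym3 K HK.
  field_det Hd.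
Qed.

Lemma qform_Kud g K u : sym3 g -> det3 g <> 0 ->
  sum3 (fun i => sum3 (fun j => g i j * u i * sum3 (fun m => Kud g K j m * u m))) = qform K u u.
Proof. intros Hs Hd. unfold Kud, qform, sum3. expand_ginv. expand_det g Hs Hd. field_det Hd. Qed.

(* [g(u, Gamma(u,u)) = 0] expresses that [|u|^2] is conserved along left-invariant geodesics. *)
Lemma qform_gam_vanish C g u : C_antisym C -> sym3 g -> det3 g <> 0 ->
  sum3 (fun i => sum3 (fun j => g i j * u i *
    sum3 (fun k => sum3 (fun l => gam C g j k l * u k * u l)))) = 0.
Proof.
  intros HC Hs Hd. unfold gam, sum3. expand_ginv. expand_det g Hs Hd. rewrite_C_antisym C HC.
  field_det Hd.
Qed.

Lemma qform_ginv_F_vanish g F u : antisym3 F -> sym3 g -> det3 g <> 0 ->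
  sum3 (fun i => sum3 (fun j => g i j * u i *
    sum3 (fun l => sum3 (fun m => ginv g j l * F m l * u m)))) = 0.
Proof.
  intros HF Hs Hd. unfold sum3. expand_ginv. expand_det g Hs Hd. rewrite_antisym3 F HF.
  field_det Hd.
Qed.

(* The magnetic field as a vector: [(F_23, F_31, F_12)]. *)
Definition hodge_F (F : mat) : vec := fun i =>
  match i with O => F 1%nat 2%nat | S O => F 2%nat 0%nat | _ => F 0%nat 1%nat end.

Lemma tau00_hodge g E F : sym3 g -> antisym3 F -> det3 g <> 0 ->
  tau00 g E F = 1/2 * qform g E E + 1/2 * qform g (hodge_F F) (hodge_F F) / det3 g.
Proof.
  intros Hs HF Hd. unfold tau00, qform, hodge_F, sum3. expand_ginv. expand_det g Hs Hd.
  rewrite_antisym3 F HF. field_det Hd.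
Qed.

Lemma vec_of_lowered g v k : sym3 g -> det3 g <> 0 -> (k < 3)%nat ->
  v k = sum3 (fun i => ginv g k i * sum3 (fun j => g i j * v j)).
Proof.
  intros Hs Hd Hk. unfold sum3.
  destruct k as [|[|[|]]]; try lia; expand_ginv; expand_det g Hs Hd; field_det Hd.
Qed.

Lemma rhs_u_along_u C g K F E u rho e : C_antisym C -> sym3 g -> antisym3 F -> det3 g <> 0 ->
  u0 g u <> 0 -> rho <> 0 -> CE C E = - e * u0 g u ->
  sum3 (fun i => sum3 (fun j => g i j * u i * rhs_u C g K F E u rho j))
  = 2 * qform K u u - 3/4 * (e / rho) * qform g u E.
Proof.
  intros HC Hs HF Hd HU Hr HCE. unfold rhs_u. rewrite HCE. set (U := u0 g u) in *.
  transitivity (2 * sum3 (fun i => sum3 (fun j => g i j * u i * sum3 (fun m => Kud g K j m * u m)))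
     - sum3 (fun i => sum3 (fun j => g i j * u i *
         sum3 (fun k => sum3 (fun l => gam C g j k l * u k * u l)))) / U
     + 3 / (4 * rho * U) * (- e * U) * qform g u E
     - 3 / (4 * rho * U ^ 2) * (- e * U) * sum3 (fun i => sum3 (fun j => g i j * u i *
         sum3 (fun l => sum3 (fun m => ginv g j l * F m l * u m))))).
  { unfold qform, sum3. field. auto. }
  rewrite qform_Kud, qform_gam_vanish, qform_ginv_F_vanish by auto. field. auto.
Qed.

Lemma e_over_rho_deriv C g K E u rho e : u0 g u <> 0 -> rho <> 0 -> CE C E = - e * u0 g u ->
  (rhs_e C g K E u rho e * rho - rhs_rho C g K E u rho * e) / rho ^ 2
  = 3 / (4 * u0 g u) * (e / rho).
Proof.
  intros HU Hr HCE. unfold rhs_e, rhs_rho. rewrite HCE. set (U := u0 g u) in *. unfold sum3.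
  field. auto.
Qed.

(* By (C4) the [E]-source term of [rho'] is [e = (e / rho) rho] times bounded factors, so [rho']
   is linear in [rho]. *)
Definition rho_rate C g K E u rho e : R :=
  - (3 / (4 * u0 g u) + sum3 (fun i => sum3 (fun j => K i j * u i * u j)) / (u0 g u) ^ 2
     - Hmc g K + sum3 (fun j => trC C j * u j) / u0 g u)
  + 3/4 * (e / rho) * qform g u E / (u0 g u) ^ 2.

Lemma rhs_rho_rate C g K E u rho e : u0 g u <> 0 -> rho <> 0 -> CE C E = - e * u0 g u ->
  rhs_rho C g K E u rho = rho_rate C g K E u rho e * rho.
Proof.
  intros HU Hr HCE. unfold rhs_rho, rho_rate, qform. rewrite HCE. set (U := u0 g u) in *.
  unfold sum3. field. auto.
Qed.

Lemma u0_ge1 g u : posdef3 g -> 1 <= u0 g u.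
Proof.
  intros Hp. unfold u0. pose proof (posdef3_qform_nonneg g u Hp) as H. unfold qform in H.
  apply Rle_trans with (sqrt 1); [rewrite sqrt_1; lra | apply sqrt_le_1_alt; lra].
Qed.

(** * Bounds along a solution *)

Section BoundedSolution.

Variables (C : sconst) (Lam T : R) (g K F : R -> mat) (E u Th0 : R -> vec) (Th00 rho e : R -> R).

Hypothesis Hbianchi : bianchi_I_VIII C.
Hypothesis HT : 0 < T.
Hypothesis Hsol : solves_S C Lam T g K F E u Th0 Th00 rho e.
Hypothesis Hpt : forall t, 0 <= t < T ->
  sym3 (g t) /\ posdef3 (g t) /\ sym3 (K t) /\ antisym3 (F t) /\
  rho t > 0 /\ e t >= 0 /\ Th00 t >= 0 /\
  constraint1 C Lam (g t) (K t) (F t) (E t) (u t) (rho t) (Th00 t) /\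
  constraint2 C (g t) (K t) (F t) (E t) (u t) (rho t) (Th0 t) /\
  constraint3 C (F t) /\
  constraint4 C (g t) (E t) (u t) (e t).
Hypothesis HHbd : bounded_on (fun t => Hmc (g t) (K t)) T.

Ltac use_Hpt := intros Ht; destruct (Hpt _ Ht) as
  (Hgs & Hgp & HKs & HFa & Hrho & He & HTh & HC1 & HC2 & HC3 & HC4).

Lemma g_sym t : 0 <= t < T -> sym3 (g t).
Proof. use_Hpt. exact Hgs. Qed.
Lemma g_posdef t : 0 <= t < T -> posdef3 (g t).
Proof. use_Hpt. exact Hgp. Qed.
Lemma K_sym t : 0 <= t < T -> sym3 (K t).
Proof. use_Hpt. exact HKs. Qed.
Lemma F_antisym t : 0 <= t < T -> antisym3 (F t).
Proof. use_Hpt. exact HFa. Qed.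
Lemma rho_pos t : 0 <= t < T -> 0 < rho t.
Proof. use_Hpt. exact Hrho. Qed.
Lemma e_nonneg t : 0 <= t < T -> 0 <= e t.
Proof. use_Hpt. lra. Qed.
Lemma Th00_nonneg t : 0 <= t < T -> 0 <= Th00 t.
Proof. use_Hpt. lra. Qed.
Lemma momentum_constraint t : 0 <= t < T -> constraint2 C (g t) (K t) (F t) (E t) (u t) (rho t) (Th0 t).
Proof. use_Hpt. exact HC2. Qed.
Lemma CE_gauss t : 0 <= t < T -> CE C (E t) = - e t * u0 (g t) (u t).
Proof. use_Hpt. unfold constraint4 in HC4. lra. Qed.
Lemma det_g_pos t : 0 <= t < T -> 0 < det3 (g t).
Proof. intros Ht. apply (posdef3_leading_minors _ (g_sym t Ht) (g_posdef t Ht)). Qed.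
Lemma u0_ge1_sol t : 0 <= t < T -> 1 <= u0 (g t) (u t).
Proof. intros Ht. apply u0_ge1, g_posdef, Ht. Qed.

(* (C1) with [R <= 0]. *)
Lemma hamiltonian_bound t : 0 <= t < T ->
  Knorm2 (g t) (K t) + 16 * PI * (tau00 (g t) (E t) (F t) + T00 (g t) (u t) (rho t) (Th00 t))
  <= Hmc (g t) (K t) ^ 2 - 2 * Lam.
Proof.
  use_Hpt. pose proof (Rsc_nonpos C (g t) Hbianchi Hgs Hgp).
  unfold constraint1 in HC1. fold (Knorm2 (g t) (K t)) in HC1. lra.
Qed.

Lemma tau00_nonneg t : 0 <= t < T -> 0 <= tau00 (g t) (E t) (F t).
Proof.
  intros Ht. pose proof (det_g_pos t Ht).
  rewrite tau00_hodge by (auto using g_sym, F_antisym; lra).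
  pose proof (posdef3_qform_nonneg _ (E t) (g_posdef t Ht)).
  pose proof (posdef3_qform_nonneg _ (hodge_F (F t)) (g_posdef t Ht)).
  assert (0 <= qform (g t) (hodge_F (F t)) (hodge_F (F t)) / det3 (g t))
    by (apply Rmult_le_pos; [lra | apply Rlt_le, Rinv_0_lt_compat; lra]).
  lra.
Qed.

Lemma T00_nonneg t : 0 <= t < T -> 0 <= T00 (g t) (u t) (rho t) (Th00 t).
Proof.
  intros Ht. unfold T00. pose proof (rho_pos t Ht). pose proof (Th00_nonneg t Ht).
  assert (0 <= rho t * u0 (g t) (u t) ^ 2) by (apply Rmult_le_pos; [lra | apply pow2_ge_0]).
  lra.
Qed.

Lemma energy_bounded : exists Q, 0 <= Q /\ forall t, 0 <= t < T ->
  Knorm2 (g t) (K t) <= Q /\ 16 * PI * tau00 (g t) (E t) (F t) <= Q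
  /\ 16 * PI * T00 (g t) (u t) (rho t) (Th00 t) <= Q.
Proof.
  destruct HHbd as [MH HMH].
  exists (MH * MH + 2 * Rabs Lam). split.
  { pose proof (Rabs_pos Lam). pose proof (Rle_0_sqr MH). unfold Rsqr in *. lra. }
  intros t Ht.
  pose proof (hamiltonian_bound t Ht). pose proof (PI_RGT_0).
  pose proof (tau00_nonneg t Ht). pose proof (T00_nonneg t Ht).
  destruct (qform_sq_le_Knorm2 (g t) (K t) (unit3 0) (g_sym t Ht) (g_posdef t Ht) (K_sym t Ht))
    as [HK _].
  assert (Hmc (g t) (K t) ^ 2 <= MH * MH).
  { rewrite <- (pow2_abs (Hmc (g t) (K t))). pose proof (HMH t Ht).
    pose proof (Rabs_pos (Hmc (g t) (K t))). nra. }
  pose proof (Rle_abs (- Lam)). rewrite Rabs_Ropp in *.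
  assert (0 <= 16 * PI * tau00 (g t) (E t) (F t)) by (apply Rmult_le_pos; lra).
  assert (0 <= 16 * PI * T00 (g t) (u t) (rho t) (Th00 t)) by (apply Rmult_le_pos; lra).
  repeat split; lra.
Qed.

Lemma g_deriv t i j : 0 < t < T -> (i < 3)%nat -> (j < 3)%nat ->
  derivable_pt_lim (fun s => g s i j) t (rhs_g (K t) i j).
Proof.
  intros Ht Hi Hj. destruct Hsol as [Hs _].
  apply (deriv_on_interior (fun s => g s i j) (fun s => rhs_g (K s) i j) T); auto.
  apply (Hs i j Hi Hj).
Qed.

Lemma u_deriv t i : 0 < t < T -> (i < 3)%nat ->
  derivable_pt_lim (fun s => u s i) t (rhs_u C (g t) (K t) (F t) (E t) (u t) (rho t) i).
Proof.
  intros Ht Hi. destruct Hsol as [_ [Hs _]].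
  apply (deriv_on_interior (fun s => u s i)
    (fun s => rhs_u C (g s) (K s) (F s) (E s) (u s) (rho s) i) T); auto.
  apply (Hs i Hi).
Qed.

Lemma rho_deriv t : 0 < t < T -> derivable_pt_lim rho t (rhs_rho C (g t) (K t) (E t) (u t) (rho t)).
Proof.
  intros Ht. destruct Hsol as [_ [_ [_ [Hs _]]]].
  apply (deriv_on_interior rho (fun s => rhs_rho C (g s) (K s) (E s) (u s) (rho s)) T); auto.
  apply Hs.
Qed.

Lemma e_deriv t : 0 < t < T -> derivable_pt_lim e t (rhs_e C (g t) (K t) (E t) (u t) (rho t) (e t)).
Proof.
  intros Ht. destruct Hsol as [_ [_ [_ [_ Hs]]]].
  apply (deriv_on_interior e (fun s => rhs_e C (g s) (K s) (E s) (u s) (rho s) (e s)) T); auto.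
  apply Hs.
Qed.

Ltac derivable_auto := repeat first
  [ apply derivable_pt_lim_add | apply derivable_pt_lim_sub | apply derivable_pt_lim_mul
  | apply derivable_pt_lim_const | apply g_deriv; auto; lia | apply u_deriv; auto; lia ].

Lemma det_g_deriv t : 0 < t < T ->
  derivable_pt_lim (fun s => det3 (g s)) t (-2 * Hmc (g t) (K t) * det3 (g t)).
Proof.
  intros Ht. assert (Ht' : 0 <= t < T) by lra.
  eapply derivable_pt_lim_eq; [unfold det3, sum3; derivable_auto |].
  pose proof (det_g_pos t Ht').
  rewrite Rmult_assoc, <- det3_deriv_trace by (auto using g_sym, K_sym; lra).
  unfold rhs_g, sum3. ring.
Qed.

Lemma det_g_deriv_bound : exists a, 0 < a /\ forall t, 0 < t < T ->
  Rabs (-2 * Hmc (g t) (K t) * det3 (g t)) <= a * det3 (g t).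
Proof.
  destruct HHbd as [MH HMH].
  assert (MH0 : 0 <= MH) by (eapply Rle_trans; [apply Rabs_pos | apply (HMH 0); lra]).
  exists (2 * MH + 1). split; [lra |]. intros t Ht.
  assert (Ht' : 0 <= t < T) by lra. pose proof (det_g_pos t Ht'). pose proof (HMH t Ht').
  rewrite !Rabs_mult, (Rabs_right (det3 (g t))), (Rabs_left (-2)) by lra.
  pose proof (Rabs_pos (Hmc (g t) (K t))). nra.
Qed.

Lemma det_g_bounded_above : exists D, forall t, 0 <= t < T -> det3 (g t) <= D.
Proof.
  destruct det_g_deriv_bound as [a [Ha Hbd]].
  apply (gronwall_bounded_above _ _ a 0 T HT Ha (Rle_refl 0) det_g_deriv).
  intros t Ht. rewrite Rplus_0_r. auto.
Qed.

Lemma det_g_bounded_below : exists c, 0 < c /\ forall t, 0 <= t < T -> c <= det3 (g t).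
Proof.
  destruct det_g_deriv_bound as [a [Ha Hbd]].
  exact (gronwall_bounded_below _ _ a T HT Ha det_g_pos det_g_deriv Hbd).
Qed.

Lemma inv_det_g_bounded : bounded_on (fun t => / det3 (g t)) T.
Proof. destruct det_g_bounded_below as [c [Hc Hle]]. exact (bounded_on_inv _ T c Hc Hle). Qed.

Lemma K_qform_bound : exists Q, 0 < Q /\ forall t v, 0 <= t < T ->
  Rabs (qform (K t) v v) <= Q * qform (g t) v v.
Proof.
  destruct energy_bounded as [Q [HQ Hbd]].
  exists (Q + 1). split; [lra |]. intros t v Ht.
  destruct (qform_sq_le_Knorm2 (g t) (K t) v (g_sym t Ht) (g_posdef t Ht) (K_sym t Ht)) as [Hk0 Hk].
  pose proof (posdef3_qform_nonneg _ v (g_posdef t Ht)).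
  apply Rabs_le_of_sq_le; auto.
  eapply Rle_trans; [exact Hk |]. apply Rmult_le_compat_r; [nra | apply Hbd, Ht].
Qed.

Lemma trace_g_bounded : exists B, forall t, 0 <= t < T ->
  g t 0%nat 0%nat + g t 1%nat 1%nat + g t 2%nat 2%nat <= B.
Proof.
  destruct K_qform_bound as [Q [HQ HK]].
  apply (gronwall_bounded_above _
    (fun t => rhs_g (K t) 0%nat 0%nat + rhs_g (K t) 1%nat 1%nat + rhs_g (K t) 2%nat 2%nat)
    (2 * Q) 0 T HT ltac:(lra) (Rle_refl 0)).
  - intros t Ht. derivable_auto.
  - intros t Ht. assert (Ht' : 0 <= t < T) by lra. unfold rhs_g.
    pose proof (HK t (unit3 0) Ht') as K0. pose proof (HK t (unit3 1) Ht') as K1.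
    pose proof (HK t (unit3 2) Ht') as K2. rewrite !qform_unit3 in K0, K1, K2 by lia.
    replace (-2 * K t 0%nat 0%nat + -2 * K t 1%nat 1%nat + -2 * K t 2%nat 2%nat)
      with (-2 * (K t 0%nat 0%nat + K t 1%nat 1%nat + K t 2%nat 2%nat)) by ring.
    rewrite Rabs_mult, (Rabs_left (-2)) by lra.
    pose proof (Rabs_triang (K t 0%nat 0%nat + K t 1%nat 1%nat) (K t 2%nat 2%nat)).
    pose proof (Rabs_triang (K t 0%nat 0%nat) (K t 1%nat 1%nat)). lra.
Qed.

(* Cauchy-Schwarz [g_ij^2 <= g_ii g_jj] and positivity of the diagonal. *)
Lemma g_entries_bounded : exists B, forall t i j, 0 <= t < T -> (i < 3)%nat -> (j < 3)%nat ->
  Rabs (g t i j) <= B.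
Proof.
  destruct trace_g_bounded as [B HB]. exists B. intros t i j Ht Hi Hj.
  pose proof (qform_cauchy_schwarz (g t) (unit3 i) (unit3 j) (g_sym t Ht) (g_posdef t Ht)) as Hcs.
  rewrite !qform_unit3_unit3 in Hcs by auto. pose proof (HB t Ht).
  pose proof (posdef3_diag_pos _ 0 (g_posdef t Ht) ltac:(lia)).
  pose proof (posdef3_diag_pos _ 1 (g_posdef t Ht) ltac:(lia)).
  pose proof (posdef3_diag_pos _ 2 (g_posdef t Ht) ltac:(lia)).
  assert (Hi' : 0 < g t i i <= B) by (destruct i as [|[|[|]]]; try lia; lra).
  assert (Hj' : 0 < g t j j <= B) by (destruct j as [|[|[|]]]; try lia; lra).
  apply Rabs_le_of_sq_le_sq; [lra |].
  eapply Rle_trans; [exact Hcs | apply Rmult_le_compat; lra].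
Qed.

Lemma metric_bounded : mbounded_on g T.
Proof.
  destruct g_entries_bounded as [B HB]. intros i j Hi Hj. exists B. intros t Ht. auto.
Qed.

Lemma ginv_bounded i j : (i < 3)%nat -> (j < 3)%nat -> bounded_on (fun t => ginv (g t) i j) T.
Proof.
  intros Hi Hj. pose proof metric_bounded. pose proof inv_det_g_bounded.
  apply (bounded_on_ext _ (fun t => cofactor3 (g t) i j / det3 (g t))).
  { intros t Ht. pose proof (det_g_pos t Ht). apply ginv_cofactor; auto using g_sym; lra. }
  destruct i as [|[|[|]]]; destruct j as [|[|[|]]]; try lia; unfold cofactor3; cbv zeta beta iota;
    bounded_on_auto.
Qed.

(* Polarisation: [2 K_ij = K(e_i + e_j) - K(e_i) - K(e_j)], each term controlled by [g]. *)
Lemma extrinsic_curvature_bounded : mbounded_on K T.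
Proof.
  destruct K_qform_bound as [Q [HQ HK]]. destruct g_entries_bounded as [B HB].
  intros i j Hi Hj. exists (3 * Q * B). intros t Ht.
  pose proof (HK t (fun k => unit3 i k + unit3 j k) Ht) as H1. rewrite !qform_unit3_sum in H1 by auto.
  pose proof (HK t (unit3 i) Ht) as H2. pose proof (HK t (unit3 j) Ht) as H3.
  rewrite !qform_unit3 in H2, H3 by auto.
  rewrite (K_sym t Ht j i), (g_sym t Ht j i) in H1 by auto.
  pose proof (HB t i i Ht Hi Hi). pose proof (HB t j j Ht Hj Hj). pose proof (HB t i j Ht Hi Hj).
  pose proof (Rle_abs (g t i j)). pose proof (Rle_abs (g t i i)). pose proof (Rle_abs (g t j j)).
  assert (Q * (g t i i + g t i j + g t i j + g t j j) <= Q * (4 * B)) by (apply Rmult_le_compat_l; lra).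
  assert (Q * g t i i <= Q * B) by (apply Rmult_le_compat_l; lra).
  assert (Q * g t j j <= Q * B) by (apply Rmult_le_compat_l; lra).
  apply Rabs_le_bounds in H1, H2, H3. apply Rabs_le. lra.
Qed.

(* [|g_ij v^j| <= sqrt (g_ii) |v|_g], then raise the index with the bounded [g^{-1}]. *)
Lemma vector_bounded_of_qform (v : R -> vec) B :
  (forall t, 0 <= t < T -> qform (g t) (v t) (v t) <= B) -> vbounded_on v T.
Proof.
  intros Hv. destruct g_entries_bounded as [Bg HBg].
  assert (Hlow : forall i, (i < 3)%nat -> bounded_on (fun t => sum3 (fun j => g t i j * v t j)) T).
  { intros i Hi. exists (Bg * B + 1). intros t Ht.
    pose proof (qform_cauchy_schwarz (g t) (unit3 i) (v t) (g_sym t Ht) (g_posdef t Ht)) as Hcs.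
    rewrite qform_unit3 in Hcs by exact Hi. rewrite <- qform_unit3_l by exact Hi.
    pose proof (posdef3_diag_pos _ i (g_posdef t Ht) Hi). pose proof (HBg t i i Ht Hi Hi).
    pose proof (Rle_abs (g t i i)). pose proof (posdef3_qform_nonneg _ (v t) (g_posdef t Ht)).
    pose proof (Hv t Ht).
    apply Rabs_le_succ_of_sq_le; [apply Rmult_le_pos; lra |].
    eapply Rle_trans; [exact Hcs | apply Rmult_le_compat; lra]. }
  intros k Hk. pose proof ginv_bounded.
  apply (bounded_on_ext _ (fun t => sum3 (fun i => ginv (g t) k i * sum3 (fun j => g t i j * v t j)))).
  { intros t Ht. pose proof (det_g_pos t Ht). apply vec_of_lowered; auto using g_sym; lra. }
  unfold sum3 at 1. bounded_on_auto.
Qed.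

Lemma electromagnetic_qform_bounded : exists B, forall t, 0 <= t < T ->
  qform (g t) (E t) (E t) <= B /\ qform (g t) (hodge_F (F t)) (hodge_F (F t)) <= B.
Proof.
  destruct energy_bounded as [Q [HQ Hbd]]. destruct det_g_bounded_above as [D HD].
  pose proof PI_RGT_0.
  set (tb := Q / (16 * PI)).
  assert (Htb : 0 <= tb) by (apply Rmult_le_pos; [lra | apply Rlt_le, Rinv_0_lt_compat; lra]).
  exists (2 * tb + 2 * tb * D). intros t Ht.
  destruct (Hbd t Ht) as [_ [Htau _]].
  assert (Htau' : tau00 (g t) (E t) (F t) <= tb)
    by (unfold tb; apply Rmult_le_reg_l with (16 * PI); [lra |]; field_simplify; lra).
  pose proof (det_g_pos t Ht) as Hdet. pose proof (HD t Ht).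
  rewrite tau00_hodge in Htau' by (auto using g_sym, F_antisym; lra).
  pose proof (posdef3_qform_nonneg _ (E t) (g_posdef t Ht)).
  set (a := qform (g t) (hodge_F (F t)) (hodge_F (F t))) in *.
  assert (Ha : 0 <= a) by apply posdef3_qform_nonneg, g_posdef, Ht.
  assert (0 <= a / det3 (g t)) by (apply Rmult_le_pos; [lra | apply Rlt_le, Rinv_0_lt_compat; lra]).
  assert (a = a / det3 (g t) * det3 (g t)) by (field; lra).
  assert (a / det3 (g t) * det3 (g t) <= 2 * tb * D) by (apply Rmult_le_compat; lra).
  assert (0 <= 2 * tb * D) by nra.
  split; lra.
Qed.

Lemma electric_field_bounded : vbounded_on E T.
Proof.
  destruct electromagnetic_qform_bounded as [B HB].
  apply (vector_bounded_of_qform E B). intros t Ht. apply HB, Ht.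
Qed.

Lemma magnetic_field_bounded : mbounded_on F T.
Proof.
  destruct electromagnetic_qform_bounded as [B HB].
  assert (Hf : vbounded_on (fun t => hodge_F (F t)) T)
    by (apply (vector_bounded_of_qform _ B); intros t Ht; apply HB, Ht).
  pose proof (Hf 0%nat ltac:(lia)) as f0. pose proof (Hf 1%nat ltac:(lia)) as f1.
  pose proof (Hf 2%nat ltac:(lia)) as f2. unfold hodge_F in f0, f1, f2.
  intros i j Hi Hj.
  destruct i as [|[|[|]]]; destruct j as [|[|[|]]]; try lia; auto.
  all: first
    [ apply (bounded_on_ext _ (fun _ => 0)); [| apply bounded_on_const];
      intros t Ht; pose proof (antisym3_entries _ (F_antisym t Ht)); lra
    | match goal with |- bounded_on (fun s => ?FF s ?i ?j) _ =>
        apply (bounded_on_ext _ (fun s => - FF s j i));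
        [intros t Ht; rewrite (F_antisym t Ht j i) by lia; ring | apply bounded_on_opp; auto]
      end ].
Qed.

Lemma matter_energy_bounded : exists B, forall t, 0 <= t < T -> Th00 t <= B /\ rho t <= B.
Proof.
  destruct energy_bounded as [Q [HQ Hbd]]. pose proof PI_RGT_0.
  exists (Q / (16 * PI)). intros t Ht. destruct (Hbd t Ht) as [_ [_ HT00]].
  assert (HT00' : T00 (g t) (u t) (rho t) (Th00 t) <= Q / (16 * PI))
    by (apply Rmult_le_reg_l with (16 * PI); [lra |]; field_simplify; lra).
  unfold T00 in HT00'. pose proof (Th00_nonneg t Ht). pose proof (rho_pos t Ht).
  pose proof (u0_ge1_sol t Ht).
  assert (rho t <= rho t * u0 (g t) (u t) ^ 2).
  { rewrite <- (Rmult_1_r (rho t)) at 1. apply Rmult_le_compat_l; nra. }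
  split; nra.
Qed.

Lemma Th00_bounded : bounded_on Th00 T.
Proof.
  destruct matter_energy_bounded as [B HB]. apply (bounded_on_between _ T B).
  intros t Ht. split; [apply Th00_nonneg, Ht | apply HB, Ht].
Qed.

Lemma rho_bounded : bounded_on rho T.
Proof.
  destruct matter_energy_bounded as [B HB]. apply (bounded_on_between _ T B).
  intros t Ht. split; [apply Rlt_le, rho_pos, Ht | apply HB, Ht].
Qed.

(* By (C4), [e / rho] solves [w' = 3 w / (4 u0)] with [u0 >= 1]. *)
Lemma e_over_rho_bounded : exists W, 0 <= W /\ forall t, 0 <= t < T -> 0 <= e t / rho t <= W.
Proof.
  assert (Hw0 : forall t, 0 <= t < T -> 0 <= e t / rho t).
  { intros t Ht. pose proof (e_nonneg t Ht). pose proof (rho_pos t Ht).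
    apply Rmult_le_pos; [lra | apply Rlt_le, Rinv_0_lt_compat; lra]. }
  destruct (gronwall_bounded_above (fun t => e t / rho t)
    (fun t => 3 / (4 * u0 (g t) (u t)) * (e t / rho t)) 1 0 T HT ltac:(lra) (Rle_refl 0)) as [W HW].
  - intros t Ht. assert (Ht' : 0 <= t < T) by lra.
    pose proof (rho_pos t Ht'). pose proof (u0_ge1_sol t Ht').
    eapply derivable_pt_lim_eq.
    + apply derivable_pt_lim_quot; [apply e_deriv | apply rho_deriv | lra]; auto.
    + apply e_over_rho_deriv; [lra | lra | apply CE_gauss, Ht'].
  - intros t Ht. assert (Ht' : 0 <= t < T) by lra.
    pose proof (Hw0 t Ht'). pose proof (u0_ge1_sol t Ht').
    assert (0 <= 3 / (4 * u0 (g t) (u t)) <= 1).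
    { split; [apply Rmult_le_pos; [lra | apply Rlt_le, Rinv_0_lt_compat; lra] |].
      apply Rmult_le_reg_r with (4 * u0 (g t) (u t)); [lra |].
      field_simplify; lra. }
    rewrite Rabs_right by (apply Rle_ge, Rmult_le_pos; lra). nra.
  - exists W. pose proof (Hw0 0 ltac:(lra)). pose proof (HW 0 ltac:(lra)).
    split; [lra |]. intros t Ht. split; auto.
Qed.

Lemma u_norm_deriv t : 0 < t < T ->
  derivable_pt_lim (fun s => 1 + qform (g s) (u s) (u s)) t
    (2 * qform (K t) (u t) (u t) - 3/2 * (e t / rho t) * qform (g t) (u t) (E t)).
Proof.
  intros Ht. assert (Ht' : 0 <= t < T) by lra.
  pose proof (rho_pos t Ht'). pose proof (u0_ge1_sol t Ht'). pose proof (det_g_pos t Ht').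
  eapply derivable_pt_lim_eq; [unfold qform, sum3; derivable_auto |].
  transitivity (sum3 (fun i => sum3 (fun j => rhs_g (K t) i j * u t i * u t j)) +
     2 * sum3 (fun i => sum3 (fun j => g t i j * u t i * rhs_u C (g t) (K t) (F t) (E t) (u t) (rho t) j))).
  { pose proof (g_sym t Ht') as Hs. clear - Hs. unfold sum3. rewrite_sym3 (g t) Hs. ring. }
  rewrite (rhs_u_along_u C (g t) (K t) (F t) (E t) (u t) (rho t) (e t)); auto using g_sym, F_antisym, CE_gauss;
    try lra.
  - unfold rhs_g, qform, sum3. field. lra.
  - destruct Hbianchi as [HC _]. exact HC.
Qed.

Lemma u_norm_bounded : exists B, forall t, 0 <= t < T -> qform (g t) (u t) (u t) <= B.
Proof.
  destruct K_qform_bound as [Q [HQ HK]]. destruct electromagnetic_qform_bounded as [BE HBE].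
  destruct e_over_rho_bounded as [W [HW0 HW]].
  assert (HBE0 : 0 <= BE).
  { destruct (HBE 0) as [HE0 _]; [lra |].
    pose proof (posdef3_qform_nonneg _ (E 0) (g_posdef 0 ltac:(lra))). lra. }
  destruct (gronwall_bounded_above _ _ (2 * Q + W) (W * BE) T HT ltac:(lra)
    ltac:(apply Rmult_le_pos; lra) u_norm_deriv) as [B HB].
  - intros t Ht. assert (Ht' : 0 <= t < T) by lra.
    pose proof (HK t (u t) Ht') as K1. pose proof (posdef3_qform_nonneg _ (u t) (g_posdef t Ht')) as Qu.
    pose proof (posdef3_qform_nonneg _ (E t) (g_posdef t Ht')) as QE. destruct (HBE t Ht') as [QE' _].
    pose proof (qform_cauchy_schwarz (g t) (u t) (E t) (g_sym t Ht') (g_posdef t Ht')) as CS.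
    set (a := qform (g t) (u t) (u t)) in *. set (b := qform (g t) (E t) (E t)) in *.
    assert (AM : Rabs (qform (g t) (u t) (E t)) <= (a + b) / 2).
    { apply Rabs_le_of_sq_le_sq; [lra |].
      eapply Rle_trans; [exact CS |]. pose proof (Rle_0_sqr (a - b)). unfold Rsqr in *. nra. }
    destruct (HW t Ht') as [W0 W1].
    assert (e t / rho t * Rabs (qform (g t) (u t) (E t)) <= W * ((a + b) / 2))
      by (apply Rmult_le_compat; auto using Rabs_pos).
    assert (Htri : Rabs (2 * qform (K t) (u t) (u t) - 3/2 * (e t / rho t) * qform (g t) (u t) (E t))
                   <= 2 * Rabs (qform (K t) (u t) (u t))
                      + 3/2 * (e t / rho t * Rabs (qform (g t) (u t) (E t)))).
    { unfold Rminus. eapply Rle_trans; [apply Rabs_triang |].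
      rewrite Rabs_Ropp, !Rabs_mult, (Rabs_right 2), (Rabs_right (3/2)), (Rabs_right (e t / rho t))
        by lra.
      lra. }
    nra.
  - exists B. intros t Ht. pose proof (HB t Ht). lra.
Qed.

Lemma velocity_bounded : vbounded_on u T.
Proof. destruct u_norm_bounded as [B HB]. exact (vector_bounded_of_qform u B HB). Qed.

Lemma u0_bounded : bounded_on (fun t => u0 (g t) (u t)) T.
Proof.
  destruct u_norm_bounded as [B HB]. apply (bounded_on_between _ T (1 + B)).
  intros t Ht. pose proof (u0_ge1_sol t Ht). pose proof (HB t Ht).
  pose proof (posdef3_qform_nonneg _ (u t) (g_posdef t Ht)).
  assert (Hsq : u0 (g t) (u t) * u0 (g t) (u t) = 1 + qform (g t) (u t) (u t))
    by (unfold u0, qform in *; apply sqrt_sqrt; lra).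
  split; nra.
Qed.

Lemma e_over_rho_bounded_on : bounded_on (fun t => e t / rho t) T.
Proof.
  destruct e_over_rho_bounded as [W [_ HW]]. exact (bounded_on_between _ T W HW).
Qed.

Lemma inv_u0_bounded : bounded_on (fun t => / u0 (g t) (u t)) T.
Proof. apply (bounded_on_inv _ T 1); [lra | exact u0_ge1_sol]. Qed.

(* [rho' = rho_rate rho] with a bounded rate, so [rho] stays away from [0]. *)
Lemma inv_rho_bounded : bounded_on (fun t => / rho t) T.
Proof.
  assert (Hrate : bounded_on (fun t => rho_rate C (g t) (K t) (E t) (u t) (rho t) (e t)) T).
  { pose proof metric_bounded. pose proof extrinsic_curvature_bounded. pose proof electric_field_bounded.
    pose proof velocity_bounded. pose proof e_over_rho_bounded_on. pose proof inv_u0_bounded.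
    pose proof HHbd.
    assert (bounded_on (fun t => / (4 * u0 (g t) (u t))) T)
      by (apply (bounded_on_inv _ T 4); [lra | intros t Ht; pose proof (u0_ge1_sol t Ht); lra]).
    assert (bounded_on (fun t => / (u0 (g t) (u t) ^ 2)) T)
      by (apply (bounded_on_inv _ T 1); [lra | intros t Ht; pose proof (u0_ge1_sol t Ht); nra]).
    unfold rho_rate, qform, sum3. bounded_on_auto. }
  destruct Hrate as [M HM].
  assert (M0 : 0 <= M) by (eapply Rle_trans; [apply Rabs_pos | apply (HM 0); lra]).
  destruct (gronwall_bounded_below rho (fun t => rho_rate C (g t) (K t) (E t) (u t) (rho t) (e t) * rho t)
    (M + 1) T HT ltac:(lra) rho_pos) as [c [Hc Hlow]].
  - intros t Ht. assert (Ht' : 0 <= t < T) by lra. pose proof (rho_pos t Ht'). pose proof (u0_ge1_sol t Ht').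
    eapply derivable_pt_lim_eq; [apply rho_deriv, Ht |].
    apply rhs_rho_rate; [lra | lra | apply CE_gauss, Ht'].
  - intros t Ht. assert (Ht' : 0 <= t < T) by lra. pose proof (rho_pos t Ht'). pose proof (HM t Ht').
    rewrite Rabs_mult, (Rabs_right (rho t)) by lra. nra.
  - exact (bounded_on_inv _ T c Hc Hlow).
Qed.

Lemma e_bounded : bounded_on e T.
Proof.
  apply (bounded_on_ext _ (fun t => e t / rho t * rho t)).
  - intros t Ht. pose proof (rho_pos t Ht). field. lra.
  - apply bounded_on_mult; [exact e_over_rho_bounded_on | exact rho_bounded].
Qed.

(* The momentum constraint (C2) expresses [g_jk Th^{0k}] through bounded quantities. *)
Lemma Th0_bounded : vbounded_on Th0 T.
Proof.
  pose proof metric_bounded. pose proof extrinsic_curvature_bounded. pose proof electric_field_bounded.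
  pose proof magnetic_field_bounded. pose proof velocity_bounded. pose proof rho_bounded.
  pose proof u0_bounded. pose proof ginv_bounded. pose proof PI_RGT_0.
  assert (Hlow : forall j, (j < 3)%nat -> bounded_on (fun t => sum3 (fun k => g t j k * Th0 t k)) T).
  { intros j Hj. apply (bounded_on_ext _ (fun t => divK C (g t) (K t) j / (8 * PI) + tau0 (E t) (F t) j
        - 4/3 * rho t * u0 (g t) (u t) * lowr (g t) (u t) j)).
    { intros t Ht. pose proof (momentum_constraint t Ht j Hj) as Hm. unfold T0 in Hm. rewrite Hm.
      field. lra. }
    unfold divK, gam, tau0, lowr, sum3. bounded_on_auto. }
  intros k Hk.
  apply (bounded_on_ext _ (fun t => sum3 (fun i => ginv (g t) k i * sum3 (fun j => g t i j * Th0 t j)))).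
  { intros t Ht. pose proof (det_g_pos t Ht). apply vec_of_lowered; auto using g_sym; lra. }
  unfold sum3 at 1. bounded_on_auto.
Qed.

End BoundedSolution.

Theorem proposition5p1 (C : sconst) (Lam Tstar : R)
  (g K F : R -> mat) (E u Th0 : R -> vec) (Th00 rho e : R -> R) :
  bianchi_I_VIII C ->
  0 < Tstar ->
  solves_S C Lam Tstar g K F E u Th0 Th00 rho e ->
  (forall t, 0 <= t < Tstar ->
     sym3 (g t) /\ posdef3 (g t) /\ sym3 (K t) /\ antisym3 (F t) /\
     rho t > 0 /\ e t >= 0 /\ Th00 t >= 0 /\
     constraint1 C Lam (g t) (K t) (F t) (E t) (u t) (rho t) (Th00 t) /\
     constraint2 C (g t) (K t) (F t) (E t) (u t) (rho t) (Th0 t) /\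
     constraint3 C (F t) /\
     constraint4 C (g t) (E t) (u t) (e t)) ->
  bounded_on (fun t => Hmc (g t) (K t)) Tstar ->
  mbounded_on g Tstar /\ mbounded_on K Tstar /\ mbounded_on F Tstar /\
  vbounded_on E Tstar /\ vbounded_on u Tstar /\
  bounded_on Th00 Tstar /\ vbounded_on Th0 Tstar /\
  bounded_on rho Tstar /\ bounded_on e Tstar /\
  bounded_on (fun t => / det3 (g t)) Tstar /\
  bounded_on (fun t => u0 (g t) (u t)) Tstar /\
  bounded_on (fun t => / rho t) Tstar.
Proof.
  intros HB HT Hsol Hpt HH.
  repeat match goal with |- _ /\ _ => split end;
    eauto using metric_bounded, extrinsic_curvature_bounded, magnetic_field_bounded,
      electric_field_bounded, velocity_bounded, Th00_bounded, Th0_bounded, rho_bounded,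
      e_bounded, inv_det_g_bounded, u0_bounded, inv_rho_bounded.
Qed.
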